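(* Let $\mathcal{I} = \frac{1}{2\pi}\big((0,1)\setminus\mathbb{Q}\big)$. Then for every $\alpha>4/3$, the $\alpha$-dimensional Hausdorff measure of $\phi(\mathcal{I})\subset\mathbb{C}$ vanishes: $\mathcal{H}^{\alpha}(\phi(\mathcal{I}))=0$. In particular $\dim_{\mathcal{H}}\phi(\mathcal{I})\le 4/3$.
   Context: $\phi(t) = \sum_{k \in \mathbb{Z}} \frac{ e^{-4\pi^2 i k^2 t} - 1 }{-4\pi^2 k^2}$ for $t\in\mathbb{R}$, where the $k=0$ term is interpreted as its limit value $it$. $\mathcal{H}^\alpha$ denotes the $\alpha$-dimensional Hausdorff measure on $\mathbb{R}^2\cong\mathbb{C}$. *)

From Stdlib Require Import Reals Lra ZArith.
Open Scope R_scope.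

Definition Cpt : Type := (R * R)%type.

Definition cdist (p q : Cpt) : R :=
  sqrt ((fst p - fst q) ^ 2 + (snd p - snd q) ^ 2).

Definition diam_le (U : Cpt -> Prop) (d : R) : Prop :=
  forall p q, U p -> U q -> cdist p q <= d.

(* H^alpha(E) = sup_{delta>0} H^alpha_delta(E) = 0, unfolded:
   for every delta > 0 and eps > 0 there is a countable cover of E by sets
   of diameter <= delta whose alpha-powers of diameters sum to <= eps.
   (Positive upper bounds d i >= diam (U i) are used, so that Rpower is
   well defined; this does not change the infimum.) *)
Definition hausdorff_null (alpha : R) (E : Cpt -> Prop) : Prop :=
  forall delta eps : R, 0 < delta -> 0 < eps ->
  exists (U : nat -> Cpt -> Prop) (d : nat -> R),
    (forall i, 0 < d i <= delta /\ diam_le (U i) (d i)) /\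
    (forall p, E p -> exists i, U i p) /\
    (forall n, sum_f_R0 (fun i => Rpower (d i) alpha) n <= eps).

(* The k-th term (e^{-4 pi^2 i k^2 t} - 1) / (-4 pi^2 k^2), split into real
   and imaginary parts; for k = 0 it is the limit value i t. *)
Definition phi_term_re (k : Z) (t : R) : R :=
  if Z.eqb k 0 then 0
  else (1 - cos (4 * PI ^ 2 * (IZR k) ^ 2 * t)) / (4 * PI ^ 2 * (IZR k) ^ 2).

Definition phi_term_im (k : Z) (t : R) : R :=
  if Z.eqb k 0 then t
  else sin (4 * PI ^ 2 * (IZR k) ^ 2 * t) / (4 * PI ^ 2 * (IZR k) ^ 2).

Definition sym_partial (f : Z -> R) (N : nat) : R :=
  sum_f_R0 (fun n => f (Z.of_nat n - Z.of_nat N)%Z) (2 * N).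

(* phi(t) = z : the (absolutely convergent) sum over Z equals z *)
Definition phi_at (t : R) (z : Cpt) : Prop :=
  Un_cv (sym_partial (fun k => phi_term_re k t)) (fst z) /\
  Un_cv (sym_partial (fun k => phi_term_im k t)) (snd z).

Definition is_rational (x : R) : Prop :=
  exists p q : Z, q <> 0%Z /\ x = IZR p / IZR q.

Definition in_I (t : R) : Prop :=
  0 < 2 * PI * t < 1 /\ ~ is_rational (2 * PI * t).

Definition phi_I (z : Cpt) : Prop := exists t, in_I t /\ phi_at t z.

(* Writing x = 2 pi t, the nonconstant part of phi is the weighted quadratic
   Weyl sum  sum_k e^{2 pi i k^2 x} / k^2.  The proof has four ingredients.
   1. Weyl differencing: if |x - p/q| <= 1/q^2 with gcd(p,q) = 1, every block
      of at most q consecutive terms of sum_k e^{2 pi i k^2 x} has modulus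
      O(sqrt(q log q)); hence a block of length L has modulus O((L/q + 1)
      sqrt(q log q)).
   2. Abel summation against the weights 1/k^2 then shows that the weighted
      sums at x and at p/q differ by O(q^{-3/2} sqrt(log q)), so the set of
      phi(t) with |2 pi t - p/q| <= 1/q^2 has diameter
      cell_diam q = O(q^{-3/2} sqrt(log q)).
   3. Dirichlet's theorem: every irrational x in (0,1) has such approximations
      p/q with q arbitrarily large, so these "cells" with q >= Q cover phi(I).
   4. For alpha > 4/3 the exponent sum  sum_{q >= Q} (2q+1) cell_diam q^alpha
      is finite and tends to 0 as Q grows, which gives H^alpha(phi(I)) = 0.
   The file develops finite sums, the exponential-sum estimates, the
   description of phi by partial sums, Dirichlet approximation and the
   exponent bookkeeping in this order, and ends with the main theorem. *)

From Stdlib Require Import Reals Lra Lia ZArith.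
From Coquelicot Require Import Coquelicot.
Open Scope R_scope.

(* [rsum f a n] is f a + f (a+1) + ... + f (a+n-1); unlike [sum_f_R0] it has
   an explicit starting point, which the block decompositions below need. *)
Fixpoint rsum (f : nat -> R) (a n : nat) : R :=
  match n with O => 0 | S n' => rsum f a n' + f (a + n')%nat end.

Lemma rsum_split f a n m : rsum f a (n + m) = rsum f a n + rsum f (a + n) m.
Proof.
  induction m as [|m IH]; simpl.
  - rewrite Nat.add_0_r; lra.
  - rewrite Nat.add_succ_r; simpl. rewrite IH, Nat.add_assoc. lra.
Qed.

Lemma rsum_ext f g a n :
  (forall k, (a <= k < a + n)%nat -> f k = g k) -> rsum f a n = rsum g a n.
Proof.
  induction n as [|n IH]; intros H; simpl; auto.
  rewrite IH by (intros; apply H; lia). rewrite (H (a + n)%nat) by lia. reflexivity.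
Qed.

Lemma rsum_plus f g a n : rsum (fun k => f k + g k) a n = rsum f a n + rsum g a n.
Proof. induction n; simpl; lra. Qed.

Lemma rsum_minus f g a n : rsum (fun k => f k - g k) a n = rsum f a n - rsum g a n.
Proof. induction n; simpl; lra. Qed.

Lemma rsum_scal c f a n : rsum (fun k => c * f k) a n = c * rsum f a n.
Proof. induction n; simpl; lra. Qed.

Lemma rsum_scal_r f a n c : rsum (fun k => f k * c) a n = rsum f a n * c.
Proof. induction n; simpl; lra. Qed.

Lemma rsum_const c a n : rsum (fun _ => c) a n = INR n * c.
Proof. induction n as [|n IH]; simpl rsum; [simpl; lra|]. rewrite IH, S_INR. lra. Qed.

Lemma rsum_le f g a n :
  (forall k, (a <= k < a + n)%nat -> f k <= g k) -> rsum f a n <= rsum g a n.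
Proof.
  induction n as [|n IH]; intros H; simpl; [lra|].
  assert (rsum f a n <= rsum g a n) by (apply IH; intros; apply H; lia).
  assert (f (a + n)%nat <= g (a + n)%nat) by (apply H; lia). lra.
Qed.

Lemma rsum_nonneg f a n : (forall k, (a <= k < a + n)%nat -> 0 <= f k) -> 0 <= rsum f a n.
Proof.
  intros H. rewrite <- (Rmult_0_r (INR n)), <- (rsum_const 0 a n). apply rsum_le; auto.
Qed.

Lemma rsum_abs f a n : Rabs (rsum f a n) <= rsum (fun k => Rabs (f k)) a n.
Proof.
  induction n; simpl; [rewrite Rabs_R0; lra|].
  eapply Rle_trans; [apply Rabs_triang | lra].
Qed.

Lemma rsum_abs_le1 f a n : (forall k, Rabs (f k) <= 1) -> Rabs (rsum f a n) <= INR n.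
Proof.
  intros H. eapply Rle_trans; [apply rsum_abs|].
  rewrite <- (Rmult_1_r (INR n)), <- (rsum_const 1 a n). apply rsum_le; auto.
Qed.

Lemma rsum_shift f a n : rsum f a n = rsum (fun k => f (a + k)%nat) 0 n.
Proof. induction n as [|n IH]; simpl; auto. rewrite IH. reflexivity. Qed.

Lemma rsum_first f a n : rsum f a (S n) = f a + rsum f (S a) n.
Proof.
  induction n as [|n IH]; [simpl; rewrite Nat.add_0_r; lra|].
  change (rsum f a (S (S n))) with (rsum f a (S n) + f (a + S n)%nat).
  rewrite IH. simpl. replace (S (a + n)) with (a + S n)%nat by lia. lra.
Qed.

Lemma rsum_rev f n : rsum f 0 n = rsum (fun k => f (n - 1 - k)%nat) 0 n.
Proof.
  induction n as [|n IH]; [reflexivity|].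
  change (rsum f 0 (S n)) with (rsum f 0 n + f (0 + n)%nat).
  rewrite (rsum_first (fun k => f (S n - 1 - k)%nat)), IH, (rsum_shift _ 1).
  assert (rsum (fun k => f (n - 1 - k)%nat) 0 n
          = rsum (fun k => f (S n - 1 - (1 + k))%nat) 0 n)
    by (apply rsum_ext; intros; f_equal; lia).
  replace (S n - 1 - 0)%nat with n by lia. simpl (0 + n)%nat. lra.
Qed.

Lemma rsum_telescope g a n : rsum (fun k => g k - g (S k)) a n = g a - g (a + n)%nat.
Proof.
  induction n as [|n IH]; simpl; [rewrite Nat.add_0_r; lra|].
  rewrite IH, Nat.add_succ_r. lra.
Qed.

Lemma sum_f_R0_rsum g n : sum_f_R0 g n = rsum g 0 (S n).
Proof. induction n as [|n IH]; simpl; [lra|]. rewrite IH. reflexivity. Qed.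

Lemma abel_summation (a b : nat -> R) a0 n :
  rsum (fun k => a k * b k) a0 (S n) =
  rsum a a0 (S n) * b (a0 + n)%nat +
  rsum (fun k => rsum a a0 (S k) * (b (a0 + k)%nat - b (a0 + S k)%nat)) 0 n.
Proof.
  induction n as [|n IH]; [simpl; lra|].
  change (rsum (fun k => a k * b k) a0 (S (S n))) with
    (rsum (fun k => a k * b k) a0 (S n) + a (a0 + S n)%nat * b (a0 + S n)%nat).
  change (rsum a a0 (S (S n))) with (rsum a a0 (S n) + a (a0 + S n)%nat).
  change (rsum (fun k => rsum a a0 (S k) * (b (a0 + k)%nat - b (a0 + S k)%nat)) 0 (S n))
    with (rsum (fun k => rsum a a0 (S k) * (b (a0 + k)%nat - b (a0 + S k)%nat)) 0 n
          + rsum a a0 (S (0 + n)) * (b (a0 + (0 + n))%nat - b (a0 + S (0 + n))%nat)).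
  rewrite IH. simpl (0 + n)%nat. ring.
Qed.

Lemma abel_bound (a b : nat -> R) a0 n (P : nat -> R) :
  (forall j, (1 <= j <= S n)%nat -> Rabs (rsum a a0 j) <= P j) ->
  Rabs (rsum (fun k => a k * b k) a0 (S n)) <=
  P (S n) * Rabs (b (a0 + n)%nat) +
  rsum (fun k => P (S k) * Rabs (b (a0 + k)%nat - b (a0 + S k)%nat)) 0 n.
Proof.
  intros HP. rewrite abel_summation.
  eapply Rle_trans; [apply Rabs_triang | apply Rplus_le_compat].
  - rewrite Rabs_mult. apply Rmult_le_compat_r; [apply Rabs_pos | apply HP; lia].
  - eapply Rle_trans; [apply rsum_abs | apply rsum_le]. intros k Hk.
    rewrite Rabs_mult. apply Rmult_le_compat_r; [apply Rabs_pos | apply HP; lia].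
Qed.

Lemma sum_sq_double (c s : nat -> R) a M :
  (rsum c a M)^2 + (rsum s a M)^2 =
  rsum (fun k => rsum (fun l => c k * c l + s k * s l) a M) a M.
Proof.
  assert (E : rsum (fun k => rsum (fun l => c k * c l + s k * s l) a M) a M =
              rsum (fun k => c k * rsum c a M + s k * rsum s a M) a M).
  { apply rsum_ext. intros k _. rewrite rsum_plus, !rsum_scal. reflexivity. }
  rewrite E, rsum_plus, (rsum_scal_r c), (rsum_scal_r s). ring.
Qed.

Lemma rsum_square_sym (g : nat -> nat -> R) M :
  (forall k l, g k l = g l k) ->
  rsum (fun k => rsum (fun l => g k l) 0 M) 0 M =
  rsum (fun k => g k k) 0 M + 2 * rsum (fun k => rsum (fun l => g k l) 0 k) 0 M.
Proof.
  intros Hs. induction M as [|M IH]; [simpl; lra|].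
  assert (E : rsum (fun k => rsum (fun l => g k l) 0 (S M)) 0 (S M) =
              rsum (fun k => rsum (fun l => g k l) 0 M) 0 M + rsum (fun k => g k M) 0 M
              + rsum (fun l => g M l) 0 (S M)).
  { change (rsum (fun k => rsum (fun l => g k l) 0 (S M)) 0 (S M)) with
      (rsum (fun k => rsum (fun l => g k l) 0 (S M)) 0 M
       + rsum (fun l => g (0 + M)%nat l) 0 (S M)).
    simpl (0 + M)%nat. rewrite <- rsum_plus. f_equal. }
  rewrite E, IH.
  assert (rsum (fun k => g k M) 0 M = rsum (fun l => g M l) 0 M)
    by (apply rsum_ext; intros; apply Hs).
  simpl rsum. simpl (0 + M)%nat. lra.
Qed.

Lemma rsum_triangle (h : nat -> nat -> R) M :
  rsum (fun k => rsum (fun l => h (k - l)%nat l) 0 k) 0 M =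
  rsum (fun d => rsum (fun l => h d l) 0 (M - d)) 1 M.
Proof.
  induction M as [|M IH]; [reflexivity|].
  change (rsum (fun k => rsum (fun l => h (k - l)%nat l) 0 k) 0 (S M)) with
    (rsum (fun k => rsum (fun l => h (k - l)%nat l) 0 k) 0 M
     + rsum (fun l => h (0 + M - l)%nat l) 0 (0 + M)).
  rewrite IH. simpl (0 + M)%nat.
  change (rsum (fun d => rsum (fun l => h d l) 0 (S M - d)) 1 (S M)) with
    (rsum (fun d => rsum (fun l => h d l) 0 (S M - d)) 1 M
     + rsum (fun l => h (1 + M)%nat l) 0 (S M - (1 + M))).
  replace (S M - (1 + M))%nat with 0%nat by lia.
  assert (Enew : rsum (fun d => rsum (fun l => h d l) 0 (S M - d)) 1 M =
                 rsum (fun d => rsum (fun l => h d l) 0 (M - d)) 1 M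
                 + rsum (fun d => h d (M - d)%nat) 1 M).
  { rewrite <- rsum_plus. apply rsum_ext. intros d Hd.
    replace (S M - d)%nat with (S (M - d)) by lia. reflexivity. }
  assert (Ediag : rsum (fun l => h (M - l)%nat l) 0 M = rsum (fun d => h d (M - d)%nat) 1 M).
  { rewrite rsum_rev, (rsum_shift _ 1). apply rsum_ext. intros k Hk. f_equal; lia. }
  rewrite Enew, Ediag. simpl. lra.
Qed.

Lemma rsum_square_diag (g : nat -> nat -> R) M :
  (forall k l, g k l = g l k) ->
  rsum (fun k => rsum (fun l => g k l) 0 M) 0 M =
  rsum (fun k => g k k) 0 M
  + 2 * rsum (fun d => rsum (fun l => g (l + d)%nat l) 0 (M - d)) 1 (M - 1).
Proof.
  intros Hs. rewrite rsum_square_sym by auto. do 2 f_equal.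
  rewrite (rsum_ext _ (fun k => rsum (fun l => g (l + (k - l))%nat l) 0 k))
    by (intros; apply rsum_ext; intros; f_equal; lia).
  rewrite (rsum_triangle (fun d l => g (l + d)%nat l)).
  destruct M as [|M]; [reflexivity|].
  change (rsum (fun d => rsum (fun l => g (l + d)%nat l) 0 (S M - d)) 1 (S M)) with
    (rsum (fun d => rsum (fun l => g (l + d)%nat l) 0 (S M - d)) 1 M
     + rsum (fun l => g (l + (1 + M))%nat l) 0 (S M - (1 + M))).
  replace (S M - (1 + M))%nat with 0%nat by lia. replace (S M - 1)%nat with M by lia.
  simpl. lra.
Qed.

Lemma cos_sum_telescope u c a n :
  2 * sin (u / 2) * rsum (fun l => cos (u * INR l + c)) a n =
  sin (u * INR (a + n) - u / 2 + c) - sin (u * INR a - u / 2 + c).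
Proof.
  rewrite <- rsum_scal.
  rewrite (rsum_ext _ (fun l => (- sin (u * INR l - u / 2 + c))
                                - (- sin (u * INR (S l) - u / 2 + c)))).
  - rewrite rsum_telescope. lra.
  - intros k _. rewrite S_INR.
    replace (u * (INR k + 1) - u / 2 + c) with ((u * INR k + c) + u / 2) by lra.
    replace (u * INR k - u / 2 + c) with ((u * INR k + c) - u / 2) by lra.
    rewrite sin_plus, sin_minus. ring.
Qed.

Lemma cos_sum_bound u c a n :
  Rabs (rsum (fun l => cos (u * INR l + c)) a n) * Rabs (sin (u / 2)) <= 1.
Proof.
  assert (H2 : Rabs (2 * sin (u / 2) * rsum (fun l => cos (u * INR l + c)) a n) <= 2).
  { rewrite cos_sum_telescope. eapply Rle_trans; [apply Rabs_triang|]. rewrite Rabs_Ropp.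
    pose proof (Rabs_le _ 1 (SIN_bound (u * INR (a + n) - u / 2 + c))).
    pose proof (Rabs_le _ 1 (SIN_bound (u * INR a - u / 2 + c))). lra. }
  rewrite !Rabs_mult, (Rabs_right 2) in H2 by lra. nra.
Qed.

(** * Quadratic Weyl sums and Weyl differencing *)

Definition theta (x : R) (k : nat) : R := 2 * PI * (INR k)^2 * x.

Definition weyl_cos x a M := rsum (fun k => cos (theta x k)) a M.
Definition weyl_sin x a M := rsum (fun k => sin (theta x k)) a M.

(* The d-th differenced sum: theta (k + d) - theta k is linear in k. *)
Definition diff_sum x a M d :=
  rsum (fun l => cos (4 * PI * INR d * x * INR l + 2 * PI * (INR d)^2 * x)) a (M - d).

Lemma weyl_differencing x a M :
  (weyl_cos x a M)^2 + (weyl_sin x a M)^2 = INR M + 2 * rsum (diff_sum x a M) 1 (M - 1).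
Proof.
  unfold weyl_cos, weyl_sin. rewrite sum_sq_double, (rsum_shift _ a M).
  rewrite (rsum_ext _ (fun k => rsum (fun l => cos (theta x (a + k) - theta x (a + l))) 0 M)).
  2:{ intros k _. rewrite rsum_shift. apply rsum_ext. intros l _. rewrite cos_minus. ring. }
  rewrite (rsum_square_diag (fun k l => cos (theta x (a + k) - theta x (a + l)))).
  2:{ intros. rewrite <- cos_neg. f_equal. ring. }
  rewrite (rsum_ext (fun k => cos (theta x (a + k) - theta x (a + k))) (fun _ => 1)).
  2:{ intros. rewrite Rminus_diag. apply cos_0. }
  rewrite rsum_const. f_equal; [ring|]. f_equal.
  apply rsum_ext. intros d _. unfold diff_sum. rewrite (rsum_shift _ a).
  apply rsum_ext. intros l _. f_equal. unfold theta. rewrite !plus_INR. ring.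
Qed.

Lemma weyl_differencing_bound x a M (W : nat -> R) :
  (forall d, (1 <= d < M)%nat -> Rabs (diff_sum x a M d) <= W d) ->
  (weyl_cos x a M)^2 + (weyl_sin x a M)^2 <= INR M + 2 * rsum W 1 (M - 1).
Proof.
  intros HW. rewrite weyl_differencing.
  assert (rsum (diff_sum x a M) 1 (M - 1) <= rsum W 1 (M - 1)).
  { apply rsum_le. intros d Hd. eapply Rle_trans; [apply Rle_abs | apply HW; lia]. }
  lra.
Qed.

Lemma PI_gt3 : 3 < PI.
Proof. pose proof PI2_3_2. lra. Qed.

Lemma Rabs_bounds x a : Rabs x <= a -> - a <= x <= a.
Proof. unfold Rabs; destruct (Rcase_abs x); lra. Qed.

Lemma INR_ge1 n : (1 <= n)%nat -> 1 <= INR n.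
Proof. intros; replace 1 with (INR 1) by reflexivity; apply le_INR; lia. Qed.

(* sin a >= a/3 on [0,2], from the alternating Taylor lower bound [SIN]. *)
Lemma sin_ge_third a : 0 <= a <= 2 -> a / 3 <= sin a.
Proof.
  intros Ha. assert (a <= PI) by (pose proof PI_gt3; lra).
  destruct (SIN a) as [Hlb _]; try lra.
  unfold sin_lb, sin_approx, sin_term in Hlb. cbn [sum_f_R0] in Hlb.
  rewrite !INR_IZR_INZ in Hlb.
  change (Z.of_nat (fact (2*0+1))) with 1%Z in Hlb.
  change (Z.of_nat (fact (2*1+1))) with 6%Z in Hlb.
  change (Z.of_nat (fact (2*2+1))) with 120%Z in Hlb.
  change (Z.of_nat (fact (2*3+1))) with 5040%Z in Hlb.
  simpl pow in Hlb.
  set (b := a * a) in *.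
  assert (Hb : 0 <= b <= 4) by (unfold b; nra).
  assert (Hp : 0 <= 2/3 - b/6 + b*b/120 - b*b*b/5040).
  { assert (b*b*b <= 4 * (b*b)) by nra. nra. }
  assert (E : a * 1 / 1 + -1 * 1 * (a * (a * (a * 1)) / 6) +
    -1 * (-1 * 1) * (a * (a * (a * (a * (a * 1)))) / 120) +
    -1 * (-1 * (-1 * 1)) * (a * (a * (a * (a * (a * (a * (a * 1)))))) / 5040) - a / 3
    = a * (2/3 - b/6 + b*b/120 - b*b*b/5040)) by (unfold b; field).
  assert (0 <= a * (2/3 - b/6 + b*b/120 - b*b*b/5040)) by (apply Rmult_le_pos; lra).
  lra.
Qed.

Lemma sin_pi_lower s y : 0 < s <= 1/2 -> s <= y <= 1 - s -> s <= sin (PI * y).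
Proof.
  intros Hs Hy. pose proof PI_gt3. pose proof PI_4.
  assert (Hhalf : forall z, s <= z <= 1/2 -> s <= sin (PI * z)).
  { intros z Hz. assert (sin (PI * s) <= sin (PI * z)) by (apply sin_incr_1; nra).
    assert (PI * s / 3 <= sin (PI * s)) by (apply sin_ge_third; nra). nra. }
  destruct (Rle_dec y (1/2)); [apply Hhalf; lra|].
  replace (PI * y) with (PI - PI * (1 - y)) by ring. rewrite sin_PI_x. apply Hhalf; lra.
Qed.

Lemma Rabs_sin_shift n z : Rabs (sin (INR n * PI + z)) = Rabs (sin z).
Proof.
  rewrite sin_plus.
  assert (Hs : sin (INR n * PI) = 0).
  { apply sin_eq_0_1. exists (Z.of_nat n). rewrite <- INR_IZR_INZ. reflexivity. }
  rewrite Hs, Rmult_0_l, Rplus_0_l, Rabs_mult.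
  assert (Hc2 : (cos (INR n * PI))^2 = 1).
  { pose proof (sin2_cos2 (INR n * PI)) as E. rewrite Hs in E. unfold Rsqr in E. simpl. lra. }
  assert (Hc : Rabs (cos (INR n * PI)) = 1).
  { assert (Rabs (cos (INR n * PI)) ^ 2 = 1) by (rewrite RPow_abs, Hc2; apply Rabs_R1).
    pose proof (Rabs_pos (cos (INR n * PI))). nra. }
  rewrite Hc. ring.
Qed.

(* gap_weight j ~ 1/j: reciprocal of the distance j of a residue to 0 mod q,
   capped at 1 for the residues closest to 0. *)
Definition gap_weight (n : nat) : R := if (n <=? 2)%nat then 1 else 1 / (INR n - 2).

(* The bound for the d-th differenced sum when 2 d p = m mod q. *)
Definition residue_weight (q m : nat) : R := INR q * (gap_weight m + gap_weight (q - m)).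

Lemma gap_weight_nonneg n : 0 <= gap_weight n.
Proof.
  unfold gap_weight. destruct (Nat.leb_spec n 2); [lra|].
  assert (INR n >= 3) by (replace 3 with (INR 3) by (simpl; lra); apply Rle_ge, le_INR; lia).
  apply Rlt_le, Rdiv_lt_0_compat; lra.
Qed.

Lemma residue_weight_nonneg q m : 0 <= residue_weight q m.
Proof.
  unfold residue_weight. pose proof (gap_weight_nonneg m).
  pose proof (gap_weight_nonneg (q - m)). pose proof (pos_INR q). nra.
Qed.

Lemma sin_residue_lower (p q d : nat) (x : R) :
  (1 <= q)%nat -> Rabs (x - INR p / INR q) <= 1 / (INR q)^2 -> (d <= q)%nat ->
  let m := ((2 * d * p) mod q)%nat in
  (3 <= Nat.min m (q - m))%nat ->
  (INR (Nat.min m (q - m)) - 2) / INR q <= Rabs (sin (2 * PI * INR d * x)).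
Proof.
  intros Hq Hx Hd m Hj.
  set (j := Nat.min m (q - m)) in *.
  set (n0 := ((2 * d * p) / q)%nat).
  assert (Hdiv : (2 * d * p = q * n0 + m)%nat) by apply Nat.div_mod_eq.
  assert (Hmq : (m < q)%nat) by (apply Nat.mod_upper_bound; lia).
  assert (Q1 : 1 <= INR q) by (apply INR_ge1; lia).
  set (h := x - INR p / INR q).
  set (y := INR m / INR q + 2 * INR d * h).
  assert (Ey : 2 * PI * INR d * x = INR n0 * PI + PI * y).
  { unfold y, h. apply (f_equal INR) in Hdiv. rewrite !mult_INR, plus_INR, mult_INR in Hdiv.
    assert (En : INR n0 = (2 * INR d * INR p - INR m) / INR q).
    { replace (INR 2) with 2 in Hdiv by (simpl; lra). rewrite Hdiv. field. lra. }
    rewrite En. field. lra. }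
  assert (Hdh : Rabs (2 * INR d * h) <= 2 / INR q).
  { unfold h. rewrite Rabs_mult, (Rabs_right (2 * INR d))
      by (apply Rle_ge, Rmult_le_pos; [lra | apply pos_INR]).
    assert (INR d <= INR q) by (apply le_INR; lia).
    apply Rle_trans with (2 * INR q * (1 / INR q ^ 2)).
    - apply Rmult_le_compat; try lra; [apply Rmult_le_pos; [lra | apply pos_INR] | apply Rabs_pos].
    - apply Req_le. field. lra. }
  assert (HjR : 3 <= INR j) by (replace 3 with (INR 3) by (simpl; lra); apply le_INR; lia).
  assert (HjmR : INR j <= INR m) by (apply le_INR, Nat.le_min_l).
  assert (HjqR : INR j <= INR q - INR m)
    by (rewrite <- minus_INR by lia; apply le_INR, Nat.le_min_r).
  set (s := (INR j - 2) / INR q).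
  assert (Hs : 0 < s <= 1/2).
  { unfold s. split; [apply Rdiv_lt_0_compat; lra|].
    apply Rmult_le_reg_r with (INR q); [lra|]. field_simplify; lra. }
  assert (Hys : s <= y <= 1 - s).
  { unfold s, y. apply Rabs_bounds in Hdh. split.
    - apply Rle_trans with (INR m / INR q - 2 / INR q); [|lra].
      apply Rmult_le_reg_r with (INR q); [lra|]. field_simplify; lra.
    - apply Rle_trans with (INR m / INR q + 2 / INR q); [lra|].
      apply Rmult_le_reg_r with (INR q); [lra|]. field_simplify; lra. }
  rewrite Ey, Rabs_sin_shift. pose proof (sin_pi_lower s y Hs Hys).
  rewrite Rabs_right; lra.
Qed.

Lemma diff_sum_bound (p q a M d : nat) (x : R) :
  (1 <= q)%nat -> Rabs (x - INR p / INR q) <= 1 / (INR q)^2 ->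
  (M <= q)%nat -> (1 <= d < M)%nat ->
  Rabs (diff_sum x a M d) <= residue_weight q ((2 * d * p) mod q).
Proof.
  intros Hq Hx HM Hd.
  set (I := diff_sum x a M d). set (m := ((2 * d * p) mod q)%nat).
  assert (Q1 : 1 <= INR q) by (apply INR_ge1; lia).
  assert (Htriv : Rabs I <= INR q).
  { eapply Rle_trans; [apply rsum_abs_le1; intros; apply Rabs_le, COS_bound|].
    apply le_INR. lia. }
  assert (Hlin : Rabs I * Rabs (sin (2 * PI * INR d * x)) <= 1).
  { replace (2 * PI * INR d * x) with ((4 * PI * INR d * x) / 2) by field.
    apply cos_sum_bound. }
  pose proof (gap_weight_nonneg m). pose proof (gap_weight_nonneg (q - m)).
  unfold residue_weight. fold m.
  set (j := Nat.min m (q - m)).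
  assert (Hjw : gap_weight j <= gap_weight m + gap_weight (q - m))
    by (unfold j; destruct (Nat.min_spec m (q - m)) as [[_ E]|[_ E]]; rewrite E; lra).
  destruct (Nat.leb_spec j 2) as [Hj|Hj].
  - assert (gap_weight j = 1) by (unfold gap_weight; destruct (Nat.leb_spec j 2); lia || lra).
    nra.
  - assert (Hsin := sin_residue_lower p q d x Hq Hx ltac:(lia) ltac:(fold m j; lia)).
    fold m j in Hsin.
    assert (Hjq : INR q * gap_weight j = / ((INR j - 2) / INR q)).
    { assert (3 <= INR j) by (replace 3 with (INR 3) by (simpl; lra); apply le_INR; lia).
      unfold gap_weight. destruct (Nat.leb_spec j 2); [lia|]. field. split; lra. }
    assert (Hs : 0 < (INR j - 2) / INR q).
    { assert (3 <= INR j) by (replace 3 with (INR 3) by (simpl; lra); apply le_INR; lia).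
      apply Rdiv_lt_0_compat; lra. }
    assert (Rabs I <= / ((INR j - 2) / INR q)).
    { apply Rmult_le_reg_r with ((INR j - 2) / INR q); [lra|].
      rewrite Rinv_l by lra. pose proof (Rabs_pos I). nra. }
    nra.
Qed.

Lemma rsum_indicator (F : nat -> R) v q : (v < q)%nat ->
  rsum (fun m => if Nat.eqb m v then F m else 0) 0 q = F v.
Proof.
  induction q as [|q IH]; intros Hv; [lia|].
  simpl rsum. destruct (Nat.eq_dec v q) as [->|Hne].
  - rewrite Nat.eqb_refl, (rsum_ext _ (fun _ => 0)), rsum_const; [lra|].
    intros k Hk. destruct (Nat.eqb_spec k q); [lia | reflexivity].
  - rewrite IH by lia. destruct (Nat.eqb_spec q v); [lia | lra].
Qed.

Fixpoint hit (g : nat -> nat) (a n m : nat) : R :=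
  match n with
  | O => 0
  | S n' => if Nat.eqb (g (a + n')%nat) m then 1 else hit g a n' m
  end.

Lemma hit_bounds g a n m : 0 <= hit g a n m <= 1.
Proof. induction n; simpl; [lra|]. destruct (Nat.eqb _ _); lra. Qed.

Lemma hit_zero g a n m : (forall i, (i < n)%nat -> g (a + i)%nat <> m) -> hit g a n m = 0.
Proof.
  induction n as [|n IH]; intros H; simpl; auto.
  destruct (Nat.eqb_spec (g (a + n)%nat) m) as [E|_]; [exfalso; apply (H n); auto|].
  apply IH. intros; apply H; lia.
Qed.

Lemma rsum_inj_le (F : nat -> R) (g : nat -> nat) a n q :
  (forall m, 0 <= F m) ->
  (forall i, (i < n)%nat -> (g (a + i) < q)%nat) ->
  (forall i j, (i < n)%nat -> (j < n)%nat -> g (a + i)%nat = g (a + j)%nat -> i = j) ->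
  rsum (fun k => F (g k)) a n <= rsum F 0 q.
Proof.
  intros HF Hr Hinj.
  assert (E : rsum (fun k => F (g k)) a n = rsum (fun m => F m * hit g a n m) 0 q).
  { clear HF. induction n as [|n IH].
    - simpl. rewrite (rsum_ext _ (fun _ => 0)), rsum_const; [lra|]. intros; simpl; lra.
    - simpl rsum at 1. rewrite IH by (intros; apply Hr || apply Hinj; lia).
      assert (rsum (fun m => F m * hit g a (S n) m) 0 q =
              rsum (fun m => F m * hit g a n m) 0 q +
              rsum (fun m => if Nat.eqb m (g (a + n)%nat) then F m else 0) 0 q).
      { rewrite <- rsum_plus. apply rsum_ext. intros m _. simpl.
        destruct (Nat.eqb_spec (g (a + n)%nat) m), (Nat.eqb_spec m (g (a + n)%nat));
          try congruence; [|lra].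
        subst. rewrite hit_zero; [lra|]. intros i Hi E. apply Hinj in E; lia. }
      rewrite H, rsum_indicator by (apply Hr; lia). lra. }
  rewrite E. apply rsum_le. intros m _.
  pose proof (hit_bounds g a n m). pose proof (HF m). nra.
Qed.

Lemma double_mult_mod_inj (p q d1 d2 : nat) : (1 <= q)%nat -> Nat.gcd q p = 1%nat ->
  (d1 < d2)%nat -> (2 * (d2 - d1) < q)%nat ->
  ((2 * d1 * p) mod q)%nat <> ((2 * d2 * p) mod q)%nat.
Proof.
  intros Hq Hg Hd Hlt E.
  pose proof (Nat.div_mod_eq (2 * d1 * p) q) as E1.
  pose proof (Nat.div_mod_eq (2 * d2 * p) q) as E2.
  assert (Hc : (2 * d2 * p = 2 * d1 * p + (2 * (d2 - d1)) * p)%nat).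
  { replace d2 with (d1 + (d2 - d1))%nat at 1 by lia. ring. }
  assert (Hdvd : Nat.divide q (p * (2 * (d2 - d1)))).
  { exists ((2 * d2 * p) / q - (2 * d1 * p) / q)%nat.
    rewrite Nat.mul_sub_distr_r. rewrite E in E1.
    rewrite (Nat.mul_comm p), (Nat.mul_comm (_ / q)), (Nat.mul_comm (_ / q)).
    revert E1 E2 Hc. generalize (2 * d1 * p)%nat (2 * d2 * p)%nat (2 * (d2 - d1) * p)%nat
      (q * (2 * d1 * p / q))%nat (q * (2 * d2 * p / q))%nat ((2 * d2 * p) mod q)%nat.
    intros. lia. }
  apply Nat.gauss, Nat.divide_pos_le in Hdvd; auto; lia.
Qed.

Lemma residue_window_le (p q b n : nat) (F : nat -> R) :
  (1 <= q)%nat -> Nat.gcd q p = 1%nat -> (2 * n <= q + 1)%nat -> (forall m, 0 <= F m) ->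
  rsum (fun d => F ((2 * d * p) mod q)%nat) b n <= rsum F 0 q.
Proof.
  intros Hq Hg Hn HF. apply (rsum_inj_le F (fun d => ((2 * d * p) mod q)%nat)); auto.
  - intros; apply Nat.mod_upper_bound; lia.
  - intros i j Hi Hj E. destruct (Nat.lt_total i j) as [Hij|[Hij|Hij]]; auto; exfalso.
    + apply (double_mult_mod_inj p q (b + i) (b + j)); auto; lia.
    + apply (double_mult_mod_inj p q (b + j) (b + i)); auto; lia.
Qed.

(* Each residue is hit at most twice by 2 d p mod q, 1 <= d < M <= q. *)
Lemma residue_sum_le (p q M : nat) (F : nat -> R) :
  (1 <= q)%nat -> Nat.gcd q p = 1%nat -> (M <= q)%nat -> (forall m, 0 <= F m) ->
  rsum (fun d => F ((2 * d * p) mod q)%nat) 1 (M - 1) <= 2 * rsum F 0 q.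
Proof.
  intros Hq Hg HM HF.
  assert (Hpos : 0 <= rsum F 0 q) by (apply rsum_nonneg; auto).
  set (h := (q / 2)%nat).
  assert (Hh : (2 * h <= q <= 2 * h + 1)%nat).
  { pose proof (Nat.div_mod_eq q 2). pose proof (Nat.mod_upper_bound q 2). unfold h. lia. }
  destruct (Nat.le_gt_cases (M - 1) h) as [Hle|Hgt].
  - pose proof (residue_window_le p q 1 (M - 1) F Hq Hg ltac:(lia) HF). lra.
  - replace (M - 1)%nat with (h + (M - 1 - h))%nat by lia. rewrite rsum_split.
    pose proof (residue_window_le p q 1 h F Hq Hg ltac:(lia) HF).
    pose proof (residue_window_le p q (1 + h) (M - 1 - h) F Hq Hg ltac:(lia) HF). lra.
Qed.

Lemma ln_step n : (1 <= n)%nat -> 1 / (INR n + 1) <= ln (INR n + 1) - ln (INR n).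
Proof.
  intros Hn. pose proof (INR_ge1 n Hn).
  set (z := 1 / (INR n + 1)).
  assert (Hz : 0 < z < 1).
  { unfold z. split; [apply Rdiv_lt_0_compat; lra|].
    apply Rmult_lt_reg_r with (INR n + 1); [lra|]. field_simplify; lra. }
  assert (H1 : 1 - z < exp (- z)) by (pose proof (exp_ineq1 (- z)); lra).
  assert (H2 : exp z * (1 - z) <= 1).
  { assert (exp z * exp (- z) = 1)
      by (rewrite <- exp_plus; replace (z + - z) with 0 by ring; apply exp_0).
    pose proof (exp_pos z). nra. }
  assert (E : 1 - z = INR n / (INR n + 1)) by (unfold z; field; lra).
  assert (Hexp : exp z <= (INR n + 1) / INR n).
  { rewrite E in H2. apply Rmult_le_reg_r with (INR n / (INR n + 1));
      [apply Rdiv_lt_0_compat; lra|].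
    replace ((INR n + 1) / INR n * (INR n / (INR n + 1))) with 1 by (field; lra). lra. }
  replace (ln (INR n + 1) - ln (INR n)) with (ln ((INR n + 1) / INR n)).
  2:{ unfold Rdiv. rewrite ln_mult, ln_Rinv; try lra. apply Rinv_0_lt_compat; lra. }
  rewrite <- (ln_exp z). destruct (Rle_lt_or_eq_dec _ _ Hexp) as [Hl|He].
  - left. apply ln_increasing; [apply exp_pos | auto].
  - rewrite He. lra.
Qed.

Lemma harmonic_le n : (1 <= n)%nat -> rsum (fun k => 1 / (INR k + 1)) 0 n <= 1 + ln (INR n).
Proof.
  induction n as [|n IH]; intros Hn; [lia|].
  destruct n as [|n]; [simpl; rewrite ln_1; lra|].
  specialize (IH ltac:(lia)).
  change (rsum (fun k => 1 / (INR k + 1)) 0 (S (S n))) with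
    (rsum (fun k => 1 / (INR k + 1)) 0 (S n) + 1 / (INR (0 + S n)%nat + 1)).
  replace (0 + S n)%nat with (S n) by lia.
  pose proof (ln_step (S n) ltac:(lia)). rewrite <- (S_INR (S n)) in *. lra.
Qed.

Lemma gap_weight_le n : gap_weight n <= 4 / (INR n + 1).
Proof.
  unfold gap_weight. pose proof (pos_INR n). destruct (Nat.leb_spec n 2).
  - assert (INR n <= 2) by (replace 2 with (INR 2) by (simpl; lra); apply le_INR; lia).
    apply Rmult_le_reg_r with (INR n + 1); [lra|]. field_simplify; lra.
  - assert (3 <= INR n) by (replace 3 with (INR 3) by (simpl; lra); apply le_INR; lia).
    apply Rmult_le_reg_r with ((INR n + 1) * (INR n - 2)); [nra|]. field_simplify; nra.
Qed.

Lemma residue_weight_sum q : (1 <= q)%nat ->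
  rsum (residue_weight q) 0 q <= 8 * INR q * (1 + ln (INR q)).
Proof.
  intros Hq. unfold residue_weight. rewrite rsum_scal, rsum_plus.
  pose proof (harmonic_le q Hq).
  assert (A1 : rsum gap_weight 0 q <= 4 * (1 + ln (INR q))).
  { eapply Rle_trans; [apply (rsum_le _ (fun k => 4 * (1 / (INR k + 1))))|].
    - intros; rewrite gap_weight_le; lra.
    - rewrite rsum_scal. lra. }
  assert (A2 : rsum (fun m => gap_weight (q - m)%nat) 0 q <= 4 * (1 + ln (INR q))).
  { rewrite rsum_rev. eapply Rle_trans; [apply (rsum_le _ (fun k => 4 * (1 / (INR k + 1))))|].
    - intros k Hk. replace (q - (q - 1 - k))%nat with (S k) by lia.
      rewrite gap_weight_le, S_INR. pose proof (pos_INR k).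
      apply Rmult_le_compat_l; [lra|].
      apply Rmult_le_reg_r with ((INR k + 1 + 1) * (INR k + 1)); [nra|]. field_simplify; lra.
    - rewrite rsum_scal. lra. }
  pose proof (INR_ge1 q Hq). nra.
Qed.

Lemma ln_nat_nonneg q : (1 <= q)%nat -> 0 <= ln (INR q).
Proof.
  intros Hq. pose proof (INR_ge1 q Hq) as H. rewrite <- ln_1.
  destruct (Rle_lt_or_eq_dec _ _ H) as [Hl|He]; [left; apply ln_increasing; lra|].
  rewrite He; lra.
Qed.

(* Bound on a block of at most q consecutive terms, when x is 1/q^2-close to p/q. *)
Definition block_const (q : nat) : R := sqrt (33 * INR q * (1 + ln (INR q))).

Lemma block_const_nonneg q : 0 <= block_const q.
Proof. apply sqrt_pos. Qed.

Lemma weyl_block_sq (p q a M : nat) (x : R) :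
  (1 <= q)%nat -> Nat.gcd q p = 1%nat -> Rabs (x - INR p / INR q) <= 1 / (INR q)^2 ->
  (M <= q)%nat ->
  (weyl_cos x a M)^2 + (weyl_sin x a M)^2 <= 33 * INR q * (1 + ln (INR q)).
Proof.
  intros Hq Hg Hx HM.
  eapply Rle_trans.
  { apply (weyl_differencing_bound x a M (fun d => residue_weight q ((2 * d * p) mod q)%nat)).
    intros d Hd. apply diff_sum_bound; auto. }
  pose proof (residue_sum_le p q M (residue_weight q) Hq Hg HM (residue_weight_nonneg q)).
  pose proof (residue_weight_sum q Hq).
  assert (INR M <= INR q) by (apply le_INR; auto).
  pose proof (ln_nat_nonneg q Hq). pose proof (INR_ge1 q Hq). nra.
Qed.

Lemma weyl_block_bound (p q a M : nat) (x : R) :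
  (1 <= q)%nat -> Nat.gcd q p = 1%nat -> Rabs (x - INR p / INR q) <= 1 / (INR q)^2 ->
  (M <= q)%nat ->
  Rabs (weyl_cos x a M) <= block_const q /\ Rabs (weyl_sin x a M) <= block_const q.
Proof.
  intros Hq Hg Hx HM. pose proof (weyl_block_sq p q a M x Hq Hg Hx HM). unfold block_const.
  pose proof (pow2_ge_0 (weyl_cos x a M)). pose proof (pow2_ge_0 (weyl_sin x a M)).
  split; rewrite <- sqrt_Rsqr_abs; apply sqrt_le_1_alt; unfold Rsqr; simpl in *; lra.
Qed.

Lemma mvt_bound (f f' : R -> R) a b K : a <= b ->
  (forall c, a <= c <= b -> derivable_pt_lim f c (f' c)) ->
  (forall c, a <= c <= b -> Rabs (f' c) <= K) ->
  Rabs (f b - f a) <= K * (b - a).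
Proof.
  intros Hab Hd HK. destruct (Rle_lt_or_eq_dec _ _ Hab) as [Hl|He].
  - destruct (MVT_cor2 f f' a b Hl Hd) as [c [E Hc]]. rewrite E, Rabs_mult.
    rewrite (Rabs_right (b - a)) by lra. apply Rmult_le_compat_r; [lra | apply HK; lra].
  - subst. rewrite Rminus_diag, Rabs_R0.
    specialize (HK b ltac:(lra)). pose proof (Rabs_pos (f' b)). lra.
Qed.

Lemma Rabs_sin_le z : Rabs (sin z) <= Rabs z.
Proof.
  assert (Hpos : forall w, 0 <= w -> Rabs (sin w) <= w).
  { intros w Hw. pose proof (mvt_bound sin cos 0 w 1 Hw) as H.
    rewrite sin_0, !Rminus_0_r, Rmult_1_l in H. apply H.
    - intros; apply derivable_pt_lim_sin.
    - intros; apply Rabs_le, COS_bound. }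
  destruct (Rle_dec 0 z); [rewrite (Rabs_right z) by lra; auto|].
  rewrite <- (Ropp_involutive z), sin_neg, !Rabs_Ropp, (Rabs_left z) by lra. apply Hpos. lra.
Qed.

Lemma one_minus_cos_bounds z : 0 <= 1 - cos z <= z^2 / 2.
Proof.
  pose proof (COS_bound z). split; [lra|].
  replace z with (2 * (z / 2)) at 1 by field. rewrite cos_2a_sin.
  pose proof (Rabs_sin_le (z / 2)).
  assert (sin (z / 2) ^ 2 <= (z / 2) ^ 2).
  { rewrite <- (pow2_abs (sin (z / 2))), <- (pow2_abs (z / 2)).
    apply pow_incr. split; [apply Rabs_pos | auto]. }
  simpl in *. nra.
Qed.

Lemma sinc_defect_bound z : Rabs (z * cos z - sin z) <= z^2.
Proof.
  assert (Hpos : forall w, 0 <= w -> Rabs (w * cos w - sin w) <= w^2).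
  { intros w Hw.
    pose proof (mvt_bound (fun z => z * cos z - sin z) (fun z => - (z * sin z)) 0 w w Hw) as H.
    cbv beta in H. rewrite sin_0 in H.
    replace (w * cos w - sin w) with (w * cos w - sin w - (0 * cos 0 - 0)) by ring.
    replace (w^2) with (w * (w - 0)) by ring. apply H.
    - intros c _. apply is_derive_Reals. auto_derive; auto. ring.
    - intros c Hc. rewrite Rabs_Ropp, Rabs_mult, (Rabs_right c) by lra.
      pose proof (Rabs_le _ 1 (SIN_bound c)). nra. }
  destruct (Rle_dec 0 z); auto.
  replace (z * cos z - sin z) with (- ((-z) * cos (-z) - sin (-z)))
    by (rewrite cos_neg, sin_neg; ring).
  rewrite Rabs_Ropp. replace (z^2) with ((-z)^2) by ring. apply Hpos. lra.
Qed.

Lemma cos_quotient_lipschitz c y1 y2 : 0 < y1 <= y2 ->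
  Rabs ((cos (c * y2) - 1) / y2 - (cos (c * y1) - 1) / y1) <= 3/2 * c^2 * (y2 - y1).
Proof.
  intros Hy. apply (mvt_bound (fun y => (cos (c * y) - 1) / y)
    (fun y => (- c * sin (c * y) * y - (cos (c * y) - 1)) / y^2)); [lra| |].
  - intros y Hy'. apply is_derive_Reals. auto_derive; [lra|]. field. lra.
  - intros y Hy'. assert (0 < y) by lra.
    rewrite Rabs_div by (apply pow_nonzero; lra).
    rewrite (Rabs_right (y^2)) by (apply Rle_ge, pow2_ge_0).
    apply Rmult_le_reg_r with (y^2); [apply pow_lt; lra|].
    unfold Rdiv. rewrite Rmult_assoc, Rinv_l, Rmult_1_r by (apply pow_nonzero; lra).
    eapply Rle_trans; [apply Rabs_triang|]. rewrite Rabs_Ropp.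
    pose proof (one_minus_cos_bounds (c * y)).
    rewrite Rabs_minus_sym, (Rabs_right (1 - cos (c * y))) by lra.
    replace (- c * sin (c * y) * y) with (- (c * y) * sin (c * y)) by ring.
    rewrite Rabs_mult, Rabs_Ropp. pose proof (Rabs_sin_le (c * y)).
    pose proof (Rabs_pos (c * y)). pose proof (Rabs_pos (sin (c * y))).
    assert (Rabs (c * y) * Rabs (sin (c * y)) <= (c * y)^2)
      by (rewrite <- pow2_abs; simpl; nra).
    simpl in *. nra.
Qed.

Lemma sin_quotient_lipschitz c y1 y2 : 0 < y1 <= y2 ->
  Rabs (sin (c * y2) / y2 - sin (c * y1) / y1) <= c^2 * (y2 - y1).
Proof.
  intros Hy. apply (mvt_bound (fun y => sin (c * y) / y)
    (fun y => ((c * y) * cos (c * y) - sin (c * y)) / y^2)); [lra| |].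
  - intros y Hy'. apply is_derive_Reals. auto_derive; [lra|]. field. lra.
  - intros y Hy'. assert (0 < y) by lra.
    rewrite Rabs_div by (apply pow_nonzero; lra).
    rewrite (Rabs_right (y^2)) by (apply Rle_ge, pow2_ge_0).
    apply Rmult_le_reg_r with (y^2); [apply pow_lt; lra|].
    unfold Rdiv. rewrite Rmult_assoc, Rinv_l, Rmult_1_r by (apply pow_nonzero; lra).
    eapply Rle_trans; [apply sinc_defect_bound | right; ring].
Qed.

(** * Long Weyl sums and sums weighted by 1/k^2 *)

Definition linear_growth (c : nat -> R) (q : nat) (B : R) :=
  forall a L, Rabs (rsum c a L) <= (INR L / INR q + 1) * B.

Lemma linear_growth_of_blocks (c : nat -> R) q B : (1 <= q)%nat -> 0 <= B ->
  (forall a L, (L <= q)%nat -> Rabs (rsum c a L) <= B) -> linear_growth c q B.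
Proof.
  intros Hq HB Hb a L. revert a. induction L as [L IH] using lt_wf_ind. intros a.
  pose proof (INR_ge1 q Hq). pose proof (pos_INR L).
  destruct (Nat.le_gt_cases L q).
  - eapply Rle_trans; [apply Hb; auto|].
    assert (0 <= INR L / INR q) by (apply Rdiv_le_0_compat; lra). nra.
  - replace L with (q + (L - q))%nat by lia. rewrite rsum_split.
    eapply Rle_trans; [apply Rabs_triang|].
    pose proof (Hb a q (le_n q)) as Hhead.
    pose proof (IH (L - q)%nat ltac:(lia) (a + q)%nat) as Hrest.
    rewrite minus_INR in Hrest by lia. rewrite plus_INR, minus_INR by lia.
    replace ((INR q + (INR L - INR q)) / INR q + 1)
      with (1 + ((INR L - INR q) / INR q + 1)) by (field; lra).
    lra.
Qed.

Definition inv_sq (k : nat) : R := 1 / (INR k)^2.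

(* K |1/K^2 - 1/(K+1)^2| <= 2 (1/K - 1/(K+1)): the weights are "convex enough"
   for Abel summation against partial sums growing linearly. *)
Lemma inv_sq_step K : 1 <= K ->
  K * Rabs (1 / K^2 - 1 / (K + 1)^2) <= 2 * (1 / K - 1 / (K + 1)).
Proof.
  intros HK.
  replace (1 / K^2 - 1 / (K + 1)^2) with ((2 * K + 1) / (K^2 * (K + 1)^2)) by (field; lra).
  rewrite Rabs_right.
  2:{ apply Rle_ge, Rdiv_le_0_compat; [lra | apply Rmult_lt_0_compat; apply pow_lt; lra]. }
  replace (1 / K - 1 / (K + 1)) with (1 / (K * (K + 1))) by (field; lra).
  apply Rmult_le_reg_r with (K * (K + 1)^2); [nra|]. field_simplify; nra.
Qed.

Lemma weighted_tail_bound (c : nat -> R) q B n : (1 <= q)%nat -> 0 <= B ->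
  linear_growth c q B ->
  Rabs (rsum (fun k => c k * inv_sq k) (q + 1) n) <= 3 * B / (INR q)^2.
Proof.
  intros Hq HB Hg. pose proof (INR_ge1 q Hq) as Q1.
  assert (Q2 : 0 < (INR q)^2) by (apply pow_lt; lra).
  destruct n as [|n]; [simpl; rewrite Rabs_R0; apply Rdiv_le_0_compat; lra|].
  eapply Rle_trans.
  { apply (abel_bound c inv_sq (q + 1) n (fun j => (INR j / INR q + 1) * B)).
    intros j _. apply Hg. }
  set (Kk := fun k => INR q + 1 + INR k).
  assert (HKk : forall k, INR (q + 1 + k) = Kk k)
    by (intros; unfold Kk; rewrite !plus_INR; simpl (INR 1); ring).
  assert (HK1 : forall k, 1 <= Kk k) by (intros; unfold Kk; pose proof (pos_INR k); lra).
  assert (Hw : forall k, (INR (S k) / INR q + 1) * B = B / INR q * Kk k)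
    by (intros; unfold Kk; rewrite S_INR; field; lra).
  assert (T1 : (INR (S n) / INR q + 1) * B * Rabs (inv_sq (q + 1 + n)%nat) <= B / (INR q)^2).
  { unfold inv_sq. rewrite Hw, HKk, Rabs_right.
    2:{ apply Rle_ge, Rdiv_le_0_compat; [lra | apply pow_lt; specialize (HK1 n); lra]. }
    assert (INR q <= Kk n) by (unfold Kk; pose proof (pos_INR n); lra).
    specialize (HK1 n). apply Rmult_le_reg_r with ((INR q)^2 * Kk n); [nra|].
    field_simplify; nra. }
  assert (T2 : forall k, (INR (S k) / INR q + 1) * B
                         * Rabs (inv_sq (q + 1 + k)%nat - inv_sq (q + 1 + S k)%nat)
                         <= 2 * B / INR q * (1 / INR (q + 1 + k) - 1 / INR (q + 1 + S k))).
  { intros k. unfold inv_sq. rewrite Hw, !HKk.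
    replace (Kk (S k)) with (Kk k + 1) by (unfold Kk; rewrite S_INR; ring).
    pose proof (inv_sq_step (Kk k) (HK1 k)).
    assert (0 <= B / INR q) by (apply Rdiv_le_0_compat; lra).
    replace (2 * B / INR q) with (B / INR q * 2) by (field; lra).
    rewrite Rmult_assoc, (Rmult_assoc (B / INR q) 2). apply Rmult_le_compat_l; lra. }
  eapply Rle_trans; [apply Rplus_le_compat; [apply T1 | apply rsum_le; intros k _; apply T2]|].
  rewrite rsum_scal, (rsum_telescope (fun k => 1 / INR (q + 1 + k))).
  simpl (0 + n)%nat. rewrite Nat.add_0_r.
  assert (0 <= 1 / INR (q + 1 + n)) by (apply Rdiv_le_0_compat; [lra | apply lt_0_INR; lia]).
  assert (1 / INR (q + 1) <= 1 / INR q).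
  { rewrite plus_INR. simpl (INR 1).
    apply Rmult_le_reg_r with (INR q * (INR q + 1)); [nra|]. field_simplify; lra. }
  assert (2 * B / INR q * (1 / INR (q + 1) - 1 / INR (q + 1 + n)) <= 2 * B / (INR q)^2).
  { replace (2 * B / (INR q)^2) with (2 * B / INR q * (1 / INR q)) by (field; lra).
    apply Rmult_le_compat_l; [apply Rdiv_le_0_compat; lra | lra]. }
  replace (3 * B / INR q ^ 2) with (B / INR q ^ 2 + 2 * B / INR q ^ 2) by (field; lra). lra.
Qed.

(* Abel summation over 1 <= k <= q against weights b whose increments grow
   like the gaps (k+2)^2 - (k+1)^2 = 2k + 3 between consecutive squares. *)
Lemma head_abel_bound (c b : nat -> R) q B L1 L : (1 <= q)%nat -> 0 <= B -> 0 <= L ->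
  (forall j, (1 <= j <= q)%nat -> Rabs (rsum c 1 j) <= B) ->
  Rabs (b q) <= L1 ->
  (forall k, (k < q - 1)%nat -> Rabs (b (1 + k)%nat - b (1 + S k)%nat) <= L * (2 * INR k + 3)) ->
  Rabs (rsum (fun k => c k * b k) 1 q) <= B * (L1 + 3 * L * (INR q)^2).
Proof.
  intros Hq HB HL Hc Hb Hdiff. pose proof (INR_ge1 q Hq).
  replace q with (S (q - 1)) at 1 by lia.
  eapply Rle_trans.
  { apply (abel_bound c b 1 (q - 1) (fun _ => B)). intros j Hj; apply Hc; lia. }
  rewrite rsum_scal. replace (1 + (q - 1))%nat with q by lia.
  assert (rsum (fun k => Rabs (b (1 + k)%nat - b (1 + S k)%nat)) 0 (q - 1)
          <= 3 * L * (INR q)^2).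
  { eapply Rle_trans; [apply (rsum_le _ (fun _ => L * (3 * INR q)))|].
    - intros k Hk. eapply Rle_trans; [apply Hdiff; lia|]. apply Rmult_le_compat_l; auto.
      assert (INR (k + 2) <= INR q) by (apply le_INR; lia).
      rewrite plus_INR in *. simpl (INR 2) in *. lra.
    - rewrite rsum_const, minus_INR by lia. simpl (INR 1). nra. }
  nra.
Qed.

(* Perturbation weights: for theta x k = theta r k + 2 pi h k^2,
   cos (theta x k)/k^2 = cos (theta r k)(1/k^2 + cos_pert h k) - sin (theta r k) sin_pert h k. *)
Definition cos_pert (h : R) (k : nat) := (cos (2 * PI * h * (INR k)^2) - 1) / (INR k)^2.
Definition sin_pert (h : R) (k : nat) := sin (2 * PI * h * (INR k)^2) / (INR k)^2.

Lemma INR_succ_sq k : 0 < INR (1 + k)^2 <= INR (1 + S k)^2.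
Proof.
  assert (E1 : INR (1 + k) = INR k + 1) by (rewrite plus_INR; simpl (INR 1); ring).
  assert (E2 : INR (1 + S k) = INR k + 2) by (rewrite plus_INR, (S_INR k); simpl (INR 1); ring).
  rewrite E1, E2. pose proof (pos_INR k).
  split; [apply pow_lt; lra | apply pow_incr; split; lra].
Qed.

Lemma INR_succ_sq_gap k : INR (1 + S k)^2 - INR (1 + k)^2 = 2 * INR k + 3.
Proof.
  replace (1 + S k)%nat with (S (S k)) by lia. replace (1 + k)%nat with (S k) by lia.
  rewrite !S_INR. ring.
Qed.

Lemma pert_scale_sq q h : (1 <= q)%nat -> Rabs h <= 1 / (INR q)^2 ->
  (2 * PI * h)^2 <= 4 * PI^2 / (INR q)^4.
Proof.
  intros Hq Hh. pose proof (INR_ge1 q Hq). pose proof PI_gt3.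
  replace ((2 * PI * h)^2) with (4 * PI^2 * (Rabs h)^2) by (rewrite pow2_abs; ring).
  replace (4 * PI^2 / (INR q)^4) with (4 * PI^2 * (1 / (INR q)^2)^2) by (field; lra).
  apply Rmult_le_compat_l; [nra|]. apply pow_incr. split; [apply Rabs_pos | auto].
Qed.

Lemma head_cos_pert (c : nat -> R) q B h : (1 <= q)%nat -> 0 <= B ->
  (forall j, (1 <= j <= q)%nat -> Rabs (rsum c 1 j) <= B) ->
  Rabs h <= 1 / (INR q)^2 ->
  Rabs (rsum (fun k => c k * cos_pert h k) 1 q) <= 20 * PI^2 * B / (INR q)^2.
Proof.
  intros Hq HB Hc Hh. pose proof (INR_ge1 q Hq) as Q1.
  assert (Q2 : 0 < (INR q)^2) by (apply pow_lt; lra).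
  pose proof (pert_scale_sq q h Hq Hh) as Hs.
  assert (Hlast : Rabs (cos_pert h q) <= 2 * PI^2 / (INR q)^2).
  { unfold cos_pert. pose proof (one_minus_cos_bounds (2 * PI * h * INR q ^ 2)) as H.
    rewrite Rabs_div, (Rabs_right (INR q ^ 2)), Rabs_minus_sym, Rabs_right by lra.
    apply Rmult_le_reg_r with ((INR q)^2); [lra|]. field_simplify; try lra.
    replace ((2 * PI * h * INR q ^ 2) ^ 2 / 2) with ((2 * PI * h)^2 * (INR q)^4 / 2)
      in H by field.
    assert ((2 * PI * h)^2 * (INR q)^4 <= 4 * PI^2).
    { apply Rmult_le_reg_r with (/ (INR q)^4); [apply Rinv_0_lt_compat, pow_lt; lra|].
      rewrite Rmult_assoc, Rinv_r, Rmult_1_r by (apply pow_nonzero; lra). exact Hs. }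
    lra. }
  eapply Rle_trans.
  { apply (head_abel_bound c (cos_pert h) q B (2 * PI^2 / (INR q)^2) (3/2 * (2 * PI * h)^2)); auto.
    - pose proof (pow2_ge_0 (2 * PI * h)). lra.
    - intros k _. unfold cos_pert. rewrite Rabs_minus_sym, <- INR_succ_sq_gap.
      apply cos_quotient_lipschitz, INR_succ_sq. }
  replace (20 * PI^2 * B / (INR q)^2)
    with (B * (2 * PI^2 / (INR q)^2 + 3 * (3/2 * (4 * PI^2 / (INR q)^4)) * (INR q)^2))
    by (field; lra).
  apply Rmult_le_compat_l; [lra|]. apply Rplus_le_compat_l.
  apply Rmult_le_compat_r; [lra|]. lra.
Qed.

Lemma head_sin_pert (c : nat -> R) q B h : (1 <= q)%nat -> 0 <= B ->
  (forall j, (1 <= j <= q)%nat -> Rabs (rsum c 1 j) <= B) ->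
  Rabs h <= 1 / (INR q)^2 ->
  Rabs (rsum (fun k => c k * sin_pert h k) 1 q) <= (2 * PI + 12 * PI^2) * B / (INR q)^2.
Proof.
  intros Hq HB Hc Hh. pose proof (INR_ge1 q Hq) as Q1.
  assert (Q2 : 0 < (INR q)^2) by (apply pow_lt; lra).
  pose proof PI_gt3. pose proof (pert_scale_sq q h Hq Hh) as Hs.
  assert (Hlast : Rabs (sin_pert h q) <= 2 * PI / (INR q)^2).
  { unfold sin_pert. rewrite Rabs_div, (Rabs_right (INR q ^ 2)) by lra.
    eapply Rle_trans.
    { apply Rmult_le_compat_r; [left; apply Rinv_0_lt_compat; lra | apply Rabs_sin_le]. }
    rewrite !Rabs_mult, (Rabs_right 2), (Rabs_right PI), (Rabs_right (INR q ^ 2)) by lra.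
    replace (2 * PI * Rabs h * INR q ^ 2 * / INR q ^ 2) with (2 * PI * Rabs h) by (field; lra).
    replace (2 * PI / INR q ^ 2) with (2 * PI * (1 / INR q ^ 2)) by (field; lra).
    apply Rmult_le_compat_l; lra. }
  eapply Rle_trans.
  { apply (head_abel_bound c (sin_pert h) q B (2 * PI / (INR q)^2) ((2 * PI * h)^2)); auto.
    - apply pow2_ge_0.
    - intros k _. unfold sin_pert. rewrite Rabs_minus_sym, <- INR_succ_sq_gap.
      apply sin_quotient_lipschitz, INR_succ_sq. }
  replace ((2 * PI + 12 * PI^2) * B / (INR q)^2)
    with (B * (2 * PI / (INR q)^2 + 3 * (4 * PI^2 / (INR q)^4) * (INR q)^2))
    by (field; lra).
  apply Rmult_le_compat_l; [lra|]. apply Rplus_le_compat_l.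
  apply Rmult_le_compat_r; [lra|]. lra.
Qed.

(* The weighted sums sum_{1 <= k <= N} e^{i theta x k} / k^2, which are the
   nonconstant part of the partial sums of phi. *)
Definition wcos x N := rsum (fun k => cos (theta x k) * inv_sq k) 1 N.
Definition wsin x N := rsum (fun k => sin (theta x k) * inv_sq k) 1 N.

Lemma head_perturbation (x r : R) q B : (1 <= q)%nat -> 0 <= B ->
  Rabs (x - r) <= 1 / (INR q)^2 ->
  (forall j, (1 <= j <= q)%nat -> Rabs (weyl_cos r 1 j) <= B /\ Rabs (weyl_sin r 1 j) <= B) ->
  Rabs (wcos x q - wcos r q) <= (32 * PI^2 + 2 * PI) * B / (INR q)^2 /\
  Rabs (wsin x q - wsin r q) <= (32 * PI^2 + 2 * PI) * B / (INR q)^2.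
Proof.
  intros Hq HB Hh Hr. set (h := x - r).
  assert (Eth : forall k, theta x k = theta r k + 2 * PI * h * (INR k)^2)
    by (intros; unfold theta, h; ring).
  assert (Hc : forall j, (1 <= j <= q)%nat -> Rabs (rsum (fun k => cos (theta r k)) 1 j) <= B)
    by (intros; apply Hr; auto).
  assert (Hs : forall j, (1 <= j <= q)%nat -> Rabs (rsum (fun k => sin (theta r k)) 1 j) <= B)
    by (intros; apply Hr; auto).
  pose proof (head_cos_pert _ q B h Hq HB Hc Hh).
  pose proof (head_sin_pert _ q B h Hq HB Hc Hh).
  pose proof (head_cos_pert _ q B h Hq HB Hs Hh).
  pose proof (head_sin_pert _ q B h Hq HB Hs Hh).
  assert (Ec : wcos x q - wcos r q = rsum (fun k => cos (theta r k) * cos_pert h k) 1 q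
                                     - rsum (fun k => sin (theta r k) * sin_pert h k) 1 q).
  { unfold wcos. rewrite <- !rsum_minus. apply rsum_ext. intros k Hk.
    rewrite Eth, cos_plus. unfold inv_sq, cos_pert, sin_pert.
    assert (0 < INR k) by (apply lt_0_INR; lia). field. lra. }
  assert (Es : wsin x q - wsin r q = rsum (fun k => sin (theta r k) * cos_pert h k) 1 q
                                     + rsum (fun k => cos (theta r k) * sin_pert h k) 1 q).
  { unfold wsin. rewrite <- rsum_plus, <- rsum_minus. apply rsum_ext. intros k Hk.
    rewrite Eth, sin_plus. unfold inv_sq, cos_pert, sin_pert.
    assert (0 < INR k) by (apply lt_0_INR; lia). field. lra. }
  assert (Ek : 20 * PI^2 * B / (INR q)^2 + (2 * PI + 12 * PI^2) * B / (INR q)^2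
               = (32 * PI^2 + 2 * PI) * B / (INR q)^2)
    by (pose proof (INR_ge1 q Hq); field; lra).
  rewrite Ec, Es. split.
  - unfold Rminus. eapply Rle_trans; [apply Rabs_triang|]. rewrite Rabs_Ropp. lra.
  - eapply Rle_trans; [apply Rabs_triang | lra].
Qed.

Lemma Rabs_split_diff h1 t1 h2 t2 :
  Rabs ((h1 + t1) - (h2 + t2)) <= Rabs (h1 - h2) + Rabs t1 + Rabs t2.
Proof.
  replace ((h1 + t1) - (h2 + t2)) with ((h1 - h2) + t1 + - t2) by ring.
  eapply Rle_trans; [apply Rabs_triang|]. rewrite Rabs_Ropp.
  pose proof (Rabs_triang (h1 - h2) t1). lra.
Qed.

Lemma weighted_perturbation (p q N : nat) (x : R) :
  (1 <= q)%nat -> Nat.gcd q p = 1%nat ->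
  Rabs (x - INR p / INR q) <= 1 / (INR q)^2 -> (q <= N)%nat ->
  Rabs (wcos x N - wcos (INR p / INR q) N) <= 1000 * block_const q / (INR q)^2 /\
  Rabs (wsin x N - wsin (INR p / INR q) N) <= 1000 * block_const q / (INR q)^2.
Proof.
  intros Hq Hg Hx HN.
  set (r := INR p / INR q). set (B := block_const q).
  assert (HB : 0 <= B) by apply block_const_nonneg.
  pose proof (INR_ge1 q Hq) as Q1.
  assert (Hr : Rabs (r - INR p / INR q) <= 1 / (INR q)^2).
  { unfold r. rewrite Rminus_diag, Rabs_R0. apply Rdiv_le_0_compat; [lra | apply pow_lt; lra]. }
  assert (Hgrowth : forall y, Rabs (y - INR p / INR q) <= 1 / (INR q)^2 ->
            linear_growth (fun k => cos (theta y k)) q B /\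
            linear_growth (fun k => sin (theta y k)) q B).
  { intros y Hy. split; apply linear_growth_of_blocks; auto;
      intros a L HL; apply (weyl_block_bound p q a L y Hq Hg Hy HL). }
  destruct (Hgrowth x Hx) as [gcx gsx]. destruct (Hgrowth r Hr) as [gcr gsr].
  destruct (head_perturbation x r q B Hq HB Hx) as [Hhc Hhs].
  { intros j Hj. apply (weyl_block_bound p q 1 j r Hq Hg Hr). lia. }
  pose proof (weighted_tail_bound _ q B (N - q) Hq HB gcx).
  pose proof (weighted_tail_bound _ q B (N - q) Hq HB gsx).
  pose proof (weighted_tail_bound _ q B (N - q) Hq HB gcr).
  pose proof (weighted_tail_bound _ q B (N - q) Hq HB gsr).
  assert (Hconst : (32 * PI^2 + 2 * PI) * B / (INR q)^2 + 2 * (3 * B / (INR q)^2)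
                   <= 1000 * B / (INR q)^2).
  { pose proof PI_4. pose proof PI_gt3.
    assert (0 < / (INR q)^2) by (apply Rinv_0_lt_compat, pow_lt; lra).
    unfold Rdiv.
    assert ((32 * PI^2 + 2 * PI + 6) * B <= 1000 * B) by (apply Rmult_le_compat_r; nra).
    nra. }
  unfold wcos, wsin in *. replace N with (q + (N - q))%nat by lia.
  rewrite !rsum_split. replace (1 + q)%nat with (q + 1)%nat by lia.
  split; eapply Rle_trans; try apply Rabs_split_diff; lra.
Qed.

(** * The partial sums of phi *)

Lemma sym_partial_rsum (f : Z -> R) N :
  sym_partial f N = f 0%Z + rsum (fun n => f (Z.of_nat n) + f (- Z.of_nat n)%Z) 1 N.
Proof.
  unfold sym_partial. rewrite sum_f_R0_rsum.
  set (g := fun n : nat => f (Z.of_nat n - Z.of_nat N)%Z).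
  replace (S (2 * N)) with (N + S N)%nat by lia.
  rewrite rsum_split, rsum_first, (rsum_rev g N). simpl (0 + N)%nat.
  assert (E1 : g N = f 0%Z) by (unfold g; f_equal; lia).
  assert (E2 : rsum (fun k => g (N - 1 - k)%nat) 0 N = rsum (fun n => f (- Z.of_nat n)%Z) 1 N).
  { rewrite (rsum_shift _ 1). apply rsum_ext. intros k Hk. unfold g. f_equal. lia. }
  assert (E3 : rsum g (S N) N = rsum (fun n => f (Z.of_nat n)) 1 N).
  { rewrite (rsum_shift g), (rsum_shift _ 1). apply rsum_ext. intros k Hk. unfold g. f_equal. lia. }
  rewrite E1, E2, E3, rsum_plus. lra.
Qed.

(* For k >= 1 the terms of index k and -k coincide; their sum is
   F (theta (2 pi t) k) / (2 pi^2 k^2). *)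
Lemma phi_term_pair (F : R -> R) (g : Z -> R -> R) t k :
  (1 <= k)%nat ->
  (forall j : Z, j <> 0%Z ->
     g j t = F (4 * PI ^ 2 * (IZR j) ^ 2 * t) / (4 * PI ^ 2 * (IZR j) ^ 2)) ->
  g (Z.of_nat k) t + g (- Z.of_nat k)%Z t = F (theta (2 * PI * t) k) * inv_sq k / (2 * PI ^ 2).
Proof.
  intros Hk Hg. rewrite !Hg by lia.
  rewrite opp_IZR, <- INR_IZR_INZ.
  assert (0 < INR k) by (apply lt_0_INR; lia). pose proof PI_gt3.
  unfold inv_sq, theta.
  replace ((- INR k) ^ 2) with (INR k ^ 2) by ring.
  replace (4 * PI ^ 2 * INR k ^ 2 * t) with (2 * PI * INR k ^ 2 * (2 * PI * t)) by ring.
  field. split; lra.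
Qed.

Lemma phi_re_partial t N :
  sym_partial (fun k => phi_term_re k t) N = (rsum inv_sq 1 N - wcos (2 * PI * t) N) / (2 * PI^2).
Proof.
  rewrite sym_partial_rsum. unfold phi_term_re at 1. simpl Z.eqb. cbv iota.
  unfold wcos. rewrite <- rsum_minus. unfold Rdiv. rewrite Rmult_comm, <- rsum_scal, Rplus_0_l.
  apply rsum_ext. intros k Hk.
  rewrite (phi_term_pair (fun y => 1 - cos y) phi_term_re) by
    (auto; lia || (intros j Hj; unfold phi_term_re; rewrite (proj2 (Z.eqb_neq j 0) Hj); auto)).
  pose proof PI_gt3. assert (0 < INR k) by (apply lt_0_INR; lia).
  unfold inv_sq. field. repeat split; lra.
Qed.

Lemma phi_im_partial t N :
  sym_partial (fun k => phi_term_im k t) N = t + wsin (2 * PI * t) N / (2 * PI^2).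
Proof.
  rewrite sym_partial_rsum. unfold phi_term_im at 1. simpl Z.eqb. cbv iota.
  unfold wsin, Rdiv. rewrite (Rmult_comm (rsum _ _ _)), <- rsum_scal. f_equal.
  apply rsum_ext. intros k Hk.
  rewrite (phi_term_pair sin phi_term_im) by
    (auto; lia || (intros j Hj; unfold phi_term_im; rewrite (proj2 (Z.eqb_neq j 0) Hj); auto)).
  field. pose proof PI_gt3. lra.
Qed.

Lemma limit_diff_bound (u v : nat -> R) l1 l2 K N0 :
  Un_cv u l1 -> Un_cv v l2 -> (forall N, (N0 <= N)%nat -> Rabs (u N - v N) <= K) ->
  Rabs (l1 - l2) <= K.
Proof.
  intros Hu Hv HK. destruct (Rle_dec (Rabs (l1 - l2)) K) as [|Hn]; auto. exfalso.
  set (e := (Rabs (l1 - l2) - K) / 2).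
  assert (He : 0 < e) by (unfold e; lra).
  destruct (Hu e He) as [N1 H1]. destruct (Hv e He) as [N2 H2].
  set (N := Nat.max N0 (Nat.max N1 N2)).
  specialize (H1 N ltac:(unfold N; lia)). specialize (H2 N ltac:(unfold N; lia)).
  specialize (HK N ltac:(unfold N; lia)). unfold R_dist in *.
  assert (Rabs (l1 - l2) <= Rabs (l1 - u N) + Rabs (u N - v N) + Rabs (v N - l2)).
  { replace (l1 - l2) with ((l1 - u N) + (u N - v N) + (v N - l2)) by ring.
    eapply Rle_trans; [apply Rabs_triang | apply Rplus_le_compat_r, Rabs_triang]. }
  rewrite Rabs_minus_sym in H1. unfold e in *. lra.
Qed.

(* The parameters t with 2 pi t within 1/q^2 of p/q (gcd(p,q) = 1) are mapped
   by phi into a set of diameter at most cell_diam q = O(q^{-3/2} sqrt(log q)). *)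
Definition cell_diam (q : nat) : R := 300 * block_const q / (INR q)^2 + 1 / (INR q)^2.

Definition near_fraction (p q : nat) (t : R) : Prop :=
  Nat.gcd q p = 1%nat /\ Rabs (2 * PI * t - INR p / INR q) <= 1 / (INR q)^2.

Lemma weighted_diff_pair (p q N : nat) t1 t2 :
  (1 <= q)%nat -> near_fraction p q t1 -> near_fraction p q t2 -> (q <= N)%nat ->
  Rabs (wcos (2 * PI * t1) N - wcos (2 * PI * t2) N) <= 2000 * block_const q / (INR q)^2 /\
  Rabs (wsin (2 * PI * t1) N - wsin (2 * PI * t2) N) <= 2000 * block_const q / (INR q)^2.
Proof.
  intros Hq [Hg H1] [_ H2] HN.
  destruct (weighted_perturbation p q N (2 * PI * t1) Hq Hg H1 HN) as [A1 A2].
  destruct (weighted_perturbation p q N (2 * PI * t2) Hq Hg H2 HN) as [A3 A4].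
  set (r := INR p / INR q) in *.
  split; [replace (wcos (2 * PI * t1) N - wcos (2 * PI * t2) N)
            with ((wcos (2 * PI * t1) N - wcos r N) - (wcos (2 * PI * t2) N - wcos r N)) by ring
         |replace (wsin (2 * PI * t1) N - wsin (2 * PI * t2) N)
            with ((wsin (2 * PI * t1) N - wsin r N) - (wsin (2 * PI * t2) N - wsin r N)) by ring];
  unfold Rminus at 1; eapply Rle_trans; try apply Rabs_triang; rewrite Rabs_Ropp; lra.
Qed.

(* Dividing the weighted-sum bound by 2 pi^2 >= 18. *)
Lemma scaled_diff_bound (u B q : R) : 0 <= B -> 0 < q ->
  Rabs u <= 2000 * B / q -> Rabs (u / (2 * PI^2)) <= 112 * B / q.
Proof.
  intros HB Hq Hu. pose proof PI_gt3. assert (18 <= 2 * PI^2) by nra.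
  assert (0 <= B / q) by (apply Rdiv_le_0_compat; lra).
  replace (2000 * B / q) with (2000 * (B / q)) in Hu by (field; lra).
  replace (112 * B / q) with (112 * (B / q)) by (field; lra).
  rewrite Rabs_div, (Rabs_right (2 * PI^2)) by lra.
  apply Rmult_le_reg_r with (2 * PI^2); [lra|]. unfold Rdiv at 1.
  rewrite Rmult_assoc, Rinv_l, Rmult_1_r by lra. nra.
Qed.

Lemma phi_re_diff (p q : nat) t1 t2 z1 z2 :
  (1 <= q)%nat -> near_fraction p q t1 -> near_fraction p q t2 ->
  phi_at t1 z1 -> phi_at t2 z2 ->
  Rabs (fst z1 - fst z2) <= 112 * block_const q / (INR q)^2.
Proof.
  intros Hq H1 H2 [Re1 _] [Re2 _].
  apply (limit_diff_bound _ _ _ _ _ q Re1 Re2). intros N HN.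
  rewrite !phi_re_partial.
  replace ((rsum inv_sq 1 N - wcos (2 * PI * t1) N) / (2 * PI ^ 2)
           - (rsum inv_sq 1 N - wcos (2 * PI * t2) N) / (2 * PI ^ 2))
    with ((wcos (2 * PI * t2) N - wcos (2 * PI * t1) N) / (2 * PI ^ 2))
    by (pose proof PI_gt3; field; lra).
  apply scaled_diff_bound; [apply block_const_nonneg | apply pow_lt, lt_0_INR; lia|].
  rewrite Rabs_minus_sym. apply (weighted_diff_pair p q N t1 t2); auto.
Qed.

Lemma near_fraction_close (p q : nat) t1 t2 :
  (1 <= q)%nat -> near_fraction p q t1 -> near_fraction p q t2 ->
  Rabs (t1 - t2) <= 1 / (INR q)^2.
Proof.
  intros Hq [_ H1] [_ H2]. pose proof (INR_ge1 q Hq). pose proof PI_gt3.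
  assert (Q2 : 0 < (INR q)^2) by (apply pow_lt; lra).
  set (r := INR p / INR q) in *.
  replace (t1 - t2) with (((2 * PI * t1 - r) - (2 * PI * t2 - r)) / (2 * PI)) by (field; lra).
  rewrite Rabs_div, (Rabs_right (2 * PI)) by lra.
  assert (Rabs ((2 * PI * t1 - r) - (2 * PI * t2 - r)) <= 2 / (INR q)^2).
  { unfold Rminus at 1. eapply Rle_trans; [apply Rabs_triang|]. rewrite Rabs_Ropp.
    replace (2 / INR q ^ 2) with (1 / INR q ^ 2 + 1 / INR q ^ 2) by (field; lra). lra. }
  apply Rmult_le_reg_r with (2 * PI); [lra|]. unfold Rdiv at 1.
  rewrite Rmult_assoc, Rinv_l, Rmult_1_r by lra.
  eapply Rle_trans; [eassumption|].
  apply Rmult_le_reg_r with ((INR q)^2); [lra|]. field_simplify; lra.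
Qed.

Lemma phi_im_diff (p q : nat) t1 t2 z1 z2 :
  (1 <= q)%nat -> near_fraction p q t1 -> near_fraction p q t2 ->
  phi_at t1 z1 -> phi_at t2 z2 ->
  Rabs (snd z1 - snd z2) <= 1 / (INR q)^2 + 112 * block_const q / (INR q)^2.
Proof.
  intros Hq H1 H2 [_ Im1] [_ Im2].
  apply (limit_diff_bound _ _ _ _ _ q Im1 Im2). intros N HN.
  rewrite !phi_im_partial.
  replace (t1 + wsin (2 * PI * t1) N / (2 * PI ^ 2) - (t2 + wsin (2 * PI * t2) N / (2 * PI ^ 2)))
    with ((t1 - t2) + (wsin (2 * PI * t1) N - wsin (2 * PI * t2) N) / (2 * PI ^ 2))
    by (pose proof PI_gt3; field; lra).
  eapply Rle_trans; [apply Rabs_triang | apply Rplus_le_compat].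
  - apply (near_fraction_close p q); auto.
  - apply scaled_diff_bound; [apply block_const_nonneg | apply pow_lt, lt_0_INR; lia|].
    apply (weighted_diff_pair p q N t1 t2); auto.
Qed.

Lemma sqrt_sum_sq a b : sqrt (a^2 + b^2) <= Rabs a + Rabs b.
Proof.
  pose proof (Rabs_pos a); pose proof (Rabs_pos b).
  rewrite <- (sqrt_Rsqr (Rabs a + Rabs b)) by lra.
  apply sqrt_le_1_alt. unfold Rsqr. rewrite <- (pow2_abs a), <- (pow2_abs b). nra.
Qed.

Lemma phi_cell_diam (p q : nat) t1 t2 z1 z2 :
  (1 <= q)%nat -> near_fraction p q t1 -> near_fraction p q t2 ->
  phi_at t1 z1 -> phi_at t2 z2 -> cdist z1 z2 <= cell_diam q.
Proof.
  intros Hq H1 H2 P1 P2.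
  pose proof (phi_re_diff p q t1 t2 z1 z2 Hq H1 H2 P1 P2).
  pose proof (phi_im_diff p q t1 t2 z1 z2 Hq H1 H2 P1 P2).
  assert (0 <= 76 * block_const q / (INR q)^2).
  { apply Rdiv_le_0_compat; [pose proof (block_const_nonneg q); lra|].
    apply pow_lt, lt_0_INR; lia. }
  unfold cdist, cell_diam. eapply Rle_trans; [apply sqrt_sum_sq|].
  replace (300 * block_const q / INR q ^ 2)
    with (112 * block_const q / INR q ^ 2 + 112 * block_const q / INR q ^ 2
          + 76 * block_const q / (INR q)^2)
    by (field; apply not_0_INR; lia).
  lra.
Qed.

Lemma cell_diam_pos q : (1 <= q)%nat -> 0 < cell_diam q.
Proof.
  intros Hq. unfold cell_diam. pose proof (INR_ge1 q Hq). pose proof (block_const_nonneg q).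
  assert (0 < INR q ^ 2) by (apply pow_lt; lra).
  assert (0 <= 300 * block_const q / INR q ^ 2) by (apply Rdiv_le_0_compat; lra).
  assert (0 < 1 / INR q ^ 2) by (apply Rdiv_lt_0_compat; lra). lra.
Qed.

(** * Dirichlet's approximation theorem *)

Definition frac (r : R) : R := r - IZR (Int_part r).

Lemma frac_bounds r : 0 <= frac r < 1.
Proof. unfold frac. destruct (base_Int_part r). lra. Qed.

Lemma frac_int_dist r (m : Z) : Rmin (frac r) (1 - frac r) <= Rabs (r - IZR m).
Proof.
  unfold frac. set (n := Int_part r). destruct (base_Int_part r) as [H1 H2]. fold n in H1, H2.
  destruct (Z.le_gt_cases m n) as [Hm|Hm].
  - apply IZR_le in Hm. rewrite Rabs_right by lra.
    pose proof (Rmin_l (r - IZR n) (1 - (r - IZR n))). lra.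
  - assert (IZR (n + 1) <= IZR m) by (apply IZR_le; lia). rewrite plus_IZR in *.
    rewrite Rabs_left1 by lra. pose proof (Rmin_r (r - IZR n) (1 - (r - IZR n))). lra.
Qed.

Lemma irrational_gap (x : R) (Q : nat) : ~ is_rational x ->
  exists d, 0 < d /\ forall q, (1 <= q < Q)%nat -> forall m : Z, d <= Rabs (INR q * x - IZR m).
Proof.
  intros Hirr. induction Q as [|Q [d [Hd Hq]]]; [exists 1; split; [lra | intros; lia]|].
  destruct (Nat.eq_dec Q 0) as [->|HQ]; [exists d; split; [auto | intros; lia]|].
  set (r := INR Q * x).
  assert (Hf : frac r <> 0).
  { intros E. apply Hirr. exists (Int_part r), (Z.of_nat Q). split; [lia|].
    unfold frac in E. rewrite <- INR_IZR_INZ. assert (0 < INR Q) by (apply lt_0_INR; lia).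
    unfold r in *. replace (IZR (Int_part (INR Q * x))) with (INR Q * x) by lra. field. lra. }
  pose proof (frac_bounds r).
  exists (Rmin d (Rmin (frac r) (1 - frac r))). split.
  - apply Rmin_glb_lt; auto. apply Rmin_glb_lt; lra.
  - intros q Hq' m. destruct (Nat.eq_dec q Q) as [->|Hne].
    + eapply Rle_trans; [apply Rmin_r | apply frac_int_dist].
    + eapply Rle_trans; [apply Rmin_l | apply Hq; lia].
Qed.

Lemma pigeonhole n (f : nat -> nat) : (forall j, (j <= n)%nat -> (f j < n)%nat) ->
  exists j1 j2, (j1 < j2 <= n)%nat /\ f j1 = f j2.
Proof.
  revert f. induction n as [|n IH]; intros f Hf; [specialize (Hf 0%nat (le_n 0)); lia|].
  destruct (Classical_Prop.classic (exists j, (j <= n)%nat /\ f j = f (S n)))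
    as [[j [Hj Ej]]|Hno]; [exists j, (S n); split; [lia | auto]|].
  (* Otherwise redirect the value n to f (S n), which is not taken below S n. *)
  set (g := fun j => if Nat.eqb (f j) n then f (S n) else f j).
  assert (Hg : forall j, (j <= n)%nat -> (g j < n)%nat).
  { intros j Hj. unfold g. pose proof (Hf j ltac:(lia)). pose proof (Hf (S n) ltac:(lia)).
    destruct (Nat.eqb_spec (f j) n); [|lia].
    assert (f (S n) <> n) by (intro E; apply Hno; exists j; split; [auto | lia]). lia. }
  destruct (IH g Hg) as [j1 [j2 [Hj Ej]]]. unfold g in Ej.
  destruct (Nat.eqb_spec (f j1) n), (Nat.eqb_spec (f j2) n).
  - exists j1, j2. split; lia.
  - exfalso. apply Hno. exists j2. split; [lia | auto].
  - exfalso. apply Hno. exists j1. split; [lia | auto].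
  - exists j1, j2. split; [lia | auto].
Qed.

Lemma Int_part_range y (N : nat) : 0 <= y < INR N -> (0 <= Int_part y < Z.of_nat N)%Z.
Proof.
  intros Hy. destruct (base_Int_part y) as [H1 H2]. split.
  - assert (-1 < IZR (Int_part y)) by lra. apply lt_IZR in H. lia.
  - assert (IZR (Int_part y) < IZR (Z.of_nat N)) by (rewrite <- INR_IZR_INZ; lra).
    apply lt_IZR in H. lia.
Qed.

Lemma Int_part_eq_close y1 y2 : Int_part y1 = Int_part y2 -> Rabs (y1 - y2) < 1.
Proof.
  intros E. destruct (base_Int_part y1). destruct (base_Int_part y2). rewrite E in *.
  apply Rabs_def1; lra.
Qed.

(* Dirichlet's box principle: among the fractional parts of 0, x, ..., N x two
   lie in the same interval [i/N, (i+1)/N). *)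
Lemma dirichlet_box (x : R) (N : nat) : 0 < x -> (1 <= N)%nat ->
  exists (q0 m : nat), (1 <= q0 <= N)%nat /\ Rabs (INR q0 * x - INR m) < 1 / INR N.
Proof.
  intros Hx HN. pose proof (INR_ge1 N HN) as N1.
  set (f := fun j : nat => Z.to_nat (Int_part (INR N * frac (INR j * x)))).
  assert (Hrange : forall j, (0 <= Int_part (INR N * frac (INR j * x)) < Z.of_nat N)%Z).
  { intros j. apply Int_part_range. pose proof (frac_bounds (INR j * x)). nra. }
  destruct (pigeonhole N f) as [j1 [j2 [Hj Ej]]].
  { intros j _. unfold f. specialize (Hrange j). lia. }
  assert (Eb : Int_part (INR N * frac (INR j1 * x)) = Int_part (INR N * frac (INR j2 * x))).
  { unfold f in Ej. pose proof (Hrange j1). pose proof (Hrange j2). lia. }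
  apply Int_part_eq_close in Eb.
  set (m0 := (Int_part (INR j2 * x) - Int_part (INR j1 * x))%Z).
  assert (Hclose : Rabs (INR (j2 - j1) * x - IZR m0) < 1 / INR N).
  { unfold m0. rewrite minus_INR, minus_IZR by lia.
    replace ((INR j2 - INR j1) * x - (IZR (Int_part (INR j2 * x)) - IZR (Int_part (INR j1 * x))))
      with (- (INR N * frac (INR j1 * x) - INR N * frac (INR j2 * x)) / INR N)
      by (unfold frac; field; lra).
    unfold Rdiv. rewrite Rabs_mult, Rabs_Ropp, (Rabs_right (/ INR N))
      by (apply Rle_ge; left; apply Rinv_0_lt_compat; lra).
    apply Rmult_lt_compat_r; [apply Rinv_0_lt_compat; lra | exact Eb]. }
  (* m0 >= 0 because (j2 - j1) x > 0 and the error is less than 1. *)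
  assert (Hm0 : (0 <= m0)%Z).
  { apply Rabs_def2 in Hclose. destruct Hclose as [A B].
    assert (1 / INR N <= 1) by (apply Rmult_le_reg_r with (INR N); [lra | field_simplify; lra]).
    assert (0 < INR (j2 - j1) * x) by (apply Rmult_lt_0_compat; [apply lt_0_INR; lia | lra]).
    assert (-1 < IZR m0) by lra. apply lt_IZR in H1. lia. }
  exists (j2 - j1)%nat, (Z.to_nat m0). split; [lia|].
  rewrite (INR_IZR_INZ (Z.to_nat m0)), Z2Nat.id by lia. exact Hclose.
Qed.

Lemma reduce_to_coprime (x e : R) (q0 m : nat) : (1 <= q0)%nat ->
  Rabs (INR q0 * x - INR m) < e ->
  exists q p : nat, (1 <= q <= q0)%nat /\ Nat.gcd q p = 1%nat /\ Rabs (INR q * x - INR p) < e.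
Proof.
  intros Hq0 Hclose.
  set (g := Nat.gcd q0 m).
  assert (Hg0 : g <> 0%nat) by (unfold g; intro E; apply Nat.gcd_eq_0 in E; lia).
  destruct (Nat.gcd_divide_l q0 m) as [q Eq]. destruct (Nat.gcd_divide_r q0 m) as [p Ep].
  fold g in Eq, Ep.
  assert (Hq : (1 <= q)%nat) by (destruct q; lia).
  exists q, p. split; [|split].
  - split; [auto|]. rewrite Eq. destruct g; [lia | nia].
  - pose proof (Nat.gcd_div_gcd q0 m g Hg0 eq_refl) as H.
    rewrite Eq, Ep in H at 1. rewrite !Nat.div_mul in H by auto. exact H.
  - pose proof (INR_ge1 g ltac:(lia)) as G1.
    replace (INR q * x - INR p) with ((INR q0 * x - INR m) / INR g)
      by (rewrite Eq, Ep, !mult_INR; field; lra).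
    rewrite Rabs_div, (Rabs_right (INR g)) by lra.
    apply Rle_lt_trans with (Rabs (INR q0 * x - INR m)); [|auto].
    apply Rmult_le_reg_r with (INR g); [lra|]. field_simplify; [|lra].
    pose proof (Rabs_pos (INR q0 * x - INR m)). nra.
Qed.

Lemma dirichlet (x : R) (Q : nat) : 0 < x < 1 -> ~ is_rational x -> (1 <= Q)%nat ->
  exists q p : nat, (Q <= q)%nat /\ (p <= q)%nat /\ Nat.gcd q p = 1%nat /\
    Rabs (x - INR p / INR q) <= 1 / (INR q)^2.
Proof.
  intros Hx Hirr HQ.
  destruct (irrational_gap x Q Hirr) as [d [Hd Hgap]].
  destruct (INR_unbounded (1 / d)) as [N HN].
  assert (HN1 : (1 <= N)%nat)
    by (destruct N; [simpl in HN; assert (0 < 1 / d) by (apply Rdiv_lt_0_compat; lra); lra | lia]).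
  pose proof (INR_ge1 N HN1) as N1.
  assert (Nd : 1 / INR N < d).
  { apply Rmult_lt_reg_r with (INR N / d); [apply Rdiv_lt_0_compat; lra|].
    replace (1 / INR N * (INR N / d)) with (1 / d) by (field; lra).
    replace (d * (INR N / d)) with (INR N) by (field; lra). lra. }
  destruct (dirichlet_box x N (proj1 Hx) HN1) as [q0 [m [Hq0 Hbox]]].
  destruct (reduce_to_coprime x _ q0 m (proj1 Hq0) Hbox) as [q [p [Hq [Hcop Hclose]]]].
  pose proof (INR_ge1 q (proj1 Hq)) as Q1.
  assert (HqN : INR q <= INR N) by (apply le_INR; lia).
  assert (HQq : (Q <= q)%nat).
  { destruct (Nat.le_gt_cases Q q); auto. exfalso.
    specialize (Hgap q ltac:(lia) (Z.of_nat p)). rewrite <- INR_IZR_INZ in Hgap. lra. }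
  assert (HNq : 1 / INR N <= 1 / INR q)
    by (apply Rmult_le_reg_r with (INR N * INR q); [nra | field_simplify; lra]).
  exists q, p. split; [auto | split; [|split; [auto|]]].
  - assert (INR p < INR (q + 1)).
    { rewrite plus_INR. simpl (INR 1). apply Rabs_def2 in Hclose.
      assert (1 / INR q <= 1) by (apply Rmult_le_reg_r with (INR q); [lra | field_simplify; lra]).
      assert (INR q * x < INR q) by nra. lra. }
    apply INR_lt in H. lia.
  - replace (x - INR p / INR q) with ((INR q * x - INR p) / INR q) by (field; lra).
    rewrite Rabs_div, (Rabs_right (INR q)) by lra.
    apply Rmult_le_reg_r with (INR q); [lra|]. field_simplify; lra.
Qed.

Lemma Rpower_pos x y : 0 < Rpower x y.
Proof. unfold Rpower. apply exp_pos. Qed.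

Lemma Rpower_base1 y : Rpower 1 y = 1.
Proof. unfold Rpower. rewrite ln_1, Rmult_0_r. apply exp_0. Qed.

Lemma Rpower_neg_anti a b c : 0 <= c -> 0 < a <= b -> Rpower b (- c) <= Rpower a (- c).
Proof.
  intros Hc Hab. rewrite !Rpower_Ropp.
  apply Rinv_le_contravar; [apply Rpower_pos | apply Rle_Rpower_l; auto].
Qed.

Lemma Rpower_neg_small c T : 0 < c -> 0 < T ->
  exists M, 0 < M /\ forall y, M <= y -> Rpower y (- c) <= T.
Proof.
  intros Hc HT. exists (Rpower T (/ - c)). split; [apply Rpower_pos|].
  intros y Hy.
  replace T with (Rpower (Rpower T (/ - c)) (- c))
    by (rewrite Rpower_mult; replace (/ - c * - c) with 1 by (field; lra); apply Rpower_1; auto).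
  apply Rpower_neg_anti; [lra|]. split; [apply Rpower_pos | auto].
Qed.

Lemma ln_lt_self y : 0 < y -> ln y < y.
Proof.
  intros Hy. rewrite <- (ln_exp y) at 2. apply ln_increasing; auto.
  destruct (Req_dec y 0) as [->|Hne]; [lra|]. pose proof (exp_ineq1 y Hne). lra.
Qed.

Lemma one_plus_ln_le (q : nat) e : (1 <= q)%nat -> 0 < e ->
  1 + ln (INR q) <= (1 + 1 / e) * Rpower (INR q) e.
Proof.
  intros Hq He. pose proof (INR_ge1 q Hq).
  assert (H1 : 1 <= Rpower (INR q) e)
    by (rewrite <- (Rpower_O (INR q)) by lra; apply Rle_Rpower; lra).
  assert (H2 : e * ln (INR q) < Rpower (INR q) e)
    by (rewrite <- ln_Rpower; apply ln_lt_self, Rpower_pos).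
  assert (ln (INR q) <= 1 / e * Rpower (INR q) e)
    by (apply Rmult_le_reg_l with e; [lra | field_simplify; lra]).
  nra.
Qed.

Lemma Rpower_inv_sq q : (1 <= q)%nat -> / (INR q)^2 = Rpower (INR q) (Ropp 2).
Proof.
  intros Hq. pose proof (INR_ge1 q Hq). rewrite Rpower_Ropp. f_equal.
  replace 2 with (INR 2) by (simpl; lra). rewrite Rpower_pow by lra. reflexivity.
Qed.

Lemma cell_diam_power_bound (q : nat) e : (1 <= q)%nat -> 0 < e ->
  cell_diam q <= 1806 * sqrt (1 + 1 / e) * Rpower (INR q) ((1 + e) / 2 - 2).
Proof.
  intros Hq He. pose proof (INR_ge1 q Hq) as Q1.
  assert (Q2 : 0 < (INR q)^2) by (apply pow_lt; lra).
  pose proof (ln_nat_nonneg q Hq) as L0.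
  unfold cell_diam, block_const.
  set (S := sqrt (33 * INR q * (1 + ln (INR q)))).
  assert (S1 : 1 <= S).
  { unfold S. apply Rle_trans with (sqrt 1); [rewrite sqrt_1; lra | apply sqrt_le_1_alt].
    assert (0 <= INR q * ln (INR q)) by (apply Rmult_le_pos; lra). nra. }
  assert (Hsqrt : sqrt (INR q * (1 + ln (INR q)))
                  <= sqrt (1 + 1 / e) * Rpower (INR q) ((1 + e) / 2)).
  { assert (0 < 1 / e) by (apply Rdiv_lt_0_compat; lra).
    assert (INR q * (1 + ln (INR q)) <= (1 + 1 / e) * Rpower (INR q) (1 + e)).
    { rewrite Rpower_plus, Rpower_1 by lra. pose proof (one_plus_ln_le q e Hq He). nra. }
    eapply Rle_trans; [apply sqrt_le_1_alt; eassumption|].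
    rewrite sqrt_mult_alt by lra. apply Rmult_le_compat_l; [apply sqrt_pos|].
    rewrite <- Rpower_sqrt by apply Rpower_pos. rewrite Rpower_mult. right; f_equal; lra. }
  assert (S2 : S <= 6 * sqrt (1 + 1 / e) * Rpower (INR q) ((1 + e) / 2)).
  { unfold S. rewrite Rmult_assoc, sqrt_mult_alt by lra.
    assert (sqrt 33 <= 6) by (rewrite <- (sqrt_square 6) by lra; apply sqrt_le_1_alt; lra).
    pose proof (sqrt_pos 33). pose proof (sqrt_pos (INR q * (1 + ln (INR q)))). nra. }
  replace (300 * S / INR q ^ 2 + 1 / INR q ^ 2) with ((300 * S + 1) * Rpower (INR q) (Ropp 2))
    by (rewrite <- Rpower_inv_sq by auto; field; lra).
  replace ((1 + e) / 2 - 2) with ((1 + e) / 2 + Ropp 2) by ring. rewrite Rpower_plus.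
  pose proof (Rpower_pos (INR q) (Ropp 2)). nra.
Qed.

(* One step of the integral comparison for sum (i+1)^{-(1+s)}. *)
Lemma Rpower_neg_step y s : 2 <= y -> 0 < s ->
  Rpower y (- (1 + s)) <= (Rpower (y - 1) (- s) - Rpower y (- s)) / s.
Proof.
  intros Hy Hs.
  destruct (MVT_cor2 (fun z => Rpower z (- s)) (fun z => - s * Rpower z (- s - 1)) (y - 1) y)
    as [c [E Hc]]; [lra | intros c Hc; apply derivable_pt_lim_power; lra|].
  cbv beta in E. replace (y - (y - 1)) with 1 in E by ring.
  replace (- s - 1) with (- (1 + s)) in E by ring.
  assert (Rpower y (- (1 + s)) <= Rpower c (- (1 + s))) by (apply Rpower_neg_anti; lra).
  apply Rmult_le_reg_r with s; [auto|]. unfold Rdiv.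
  rewrite Rmult_assoc, Rinv_l, Rmult_1_r by lra. nra.
Qed.

Lemma zeta_bound s n : 0 < s ->
  rsum (fun i => Rpower (INR (i + 1)) (- (1 + s))) 0 n <= 1 + 1 / s.
Proof.
  intros Hs.
  assert (Hgen : forall m, (1 <= m)%nat ->
    rsum (fun i => Rpower (INR (i + 1)) (- (1 + s))) 0 m <= 1 + (1 - Rpower (INR m) (- s)) / s).
  { intros m Hm. induction m as [|m IH]; [lia|]. destruct m as [|m].
    - simpl. rewrite !Rpower_base1. replace (1 - 1) with 0 by ring. unfold Rdiv. lra.
    - specialize (IH ltac:(lia)).
      change (rsum (fun i => Rpower (INR (i + 1)) (- (1 + s))) 0 (S (S m))) with
        (rsum (fun i => Rpower (INR (i + 1)) (- (1 + s))) 0 (S m)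
         + Rpower (INR (0 + S m + 1)) (- (1 + s))).
      replace (0 + S m + 1)%nat with (S (S m)) by lia.
      assert (2 <= INR (S (S m))) by (rewrite !S_INR; pose proof (pos_INR m); lra).
      pose proof (Rpower_neg_step (INR (S (S m))) s ltac:(lra) Hs) as Hstep.
      replace (INR (S (S m)) - 1) with (INR (S m)) in Hstep by (rewrite (S_INR (S m)); ring).
      assert ((1 - Rpower (INR (S m)) (- s)) / s
              + (Rpower (INR (S m)) (- s) - Rpower (INR (S (S m))) (- s)) / s
              = (1 - Rpower (INR (S (S m))) (- s)) / s) by (field; lra).
      lra. }
  destruct n as [|n]; [simpl; assert (0 < 1 / s) by (apply Rdiv_lt_0_compat; lra); lra|].
  eapply Rle_trans; [apply Hgen; lia|].
  pose proof (Rpower_pos (INR (S n)) (- s)).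
  assert ((1 - Rpower (INR (S n)) (- s)) / s <= 1 / s)
    by (unfold Rdiv; apply Rmult_le_compat_r; [left; apply Rinv_0_lt_compat|]; lra).
  lra.
Qed.

Section Exponents.

Variable a : R.
Hypothesis Ha : 4/3 < a.

(* cell_diam q <= cell_const q^cell_exponent with cell_exponent * a = -(2 + 2 slack):
   the log factor is absorbed by the power q^{log_slack / 2}. *)
Definition log_slack := 3/2 - 2/a.
Definition cell_exponent := (1 + log_slack) / 2 - 2.
Definition slack := (3 * a / 4 - 1) / 2.
Definition cell_const := 1806 * sqrt (1 + 1 / log_slack).
Definition weight_const := Rpower cell_const a * Rpower 4 (1 + slack / 2).

Lemma log_slack_pos : 0 < log_slack.
Proof.
  unfold log_slack.
  assert (2 / a < 3/2) by (apply Rmult_lt_reg_r with a; [lra | field_simplify; lra]).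
  lra.
Qed.

Lemma slack_pos : 0 < slack.
Proof. unfold slack. lra. Qed.

Lemma cell_exponent_neg : cell_exponent < 0.
Proof.
  unfold cell_exponent, log_slack. assert (0 < 2 / a) by (apply Rdiv_lt_0_compat; lra). lra.
Qed.

Lemma cell_exponent_times_a : cell_exponent * a = - (2 + 2 * slack).
Proof. unfold cell_exponent, log_slack, slack. field. lra. Qed.

Lemma cell_const_pos : 0 < cell_const.
Proof.
  unfold cell_const. pose proof log_slack_pos.
  assert (0 < 1 / log_slack) by (apply Rdiv_lt_0_compat; lra).
  assert (0 < sqrt (1 + 1 / log_slack)) by (apply sqrt_lt_R0; lra). lra.
Qed.

Lemma cell_diam_le q : (1 <= q)%nat -> cell_diam q <= cell_const * Rpower (INR q) cell_exponent.
Proof. intros. apply cell_diam_power_bound; auto. apply log_slack_pos. Qed.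

Lemma cell_diam_Rpower q : (1 <= q)%nat ->
  Rpower (cell_diam q) a <= Rpower cell_const a * Rpower (INR q) (- (2 + 2 * slack)).
Proof.
  intros Hq. apply Rle_trans with (Rpower (cell_const * Rpower (INR q) cell_exponent) a).
  - apply Rle_Rpower_l; [lra|]. split; [apply cell_diam_pos | apply cell_diam_le]; auto.
  - rewrite <- Rpower_mult_distr, Rpower_mult, cell_exponent_times_a;
      [lra | apply cell_const_pos | apply Rpower_pos].
Qed.

End Exponents.

Lemma den_power_le (q i : nat) t : 0 < t -> (1 <= q)%nat -> INR (i + 1) <= 4 * (INR q * INR q) ->
  Rpower (INR q) (- (2 + t)) <= Rpower 4 (1 + t / 2) * Rpower (INR (i + 1)) (- (1 + t / 2)).
Proof.
  intros Ht Hq Hi. pose proof (INR_ge1 q Hq).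
  assert (Hi0 : 0 < INR (i + 1)) by (apply lt_0_INR; lia).
  assert (E1 : Rpower (INR q) (- (2 + t)) = Rpower (INR q * INR q) (- (1 + t / 2))).
  { replace (INR q * INR q) with (Rpower (INR q) 2)
      by (replace 2 with (INR 2) by (simpl; lra); rewrite Rpower_pow by lra; simpl; ring).
    rewrite Rpower_mult. f_equal. field. }
  assert (E2 : Rpower (INR (i + 1) / 4) (- (1 + t / 2))
               = Rpower 4 (1 + t / 2) * Rpower (INR (i + 1)) (- (1 + t / 2))).
  { unfold Rdiv. rewrite <- (Rpower_mult_distr (INR (i + 1)) (/ 4)) by lra.
    rewrite Rmult_comm. f_equal. unfold Rpower. rewrite ln_Rinv by lra. f_equal. ring. }
  rewrite E1, <- E2. apply Rpower_neg_anti; [lra|]. split; [lra|].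
  apply Rmult_le_reg_r with 4; [lra|]. unfold Rdiv. rewrite Rmult_assoc, Rinv_l by lra. lra.
Qed.

(** * The covering by cells *)

(* Cells are indexed by i : nat through the bijection i + Q^2 = q^2 + p
   (0 <= p <= 2q) onto the pairs with q >= Q. *)
Definition cell_den (Q i : nat) : nat := Nat.sqrt (i + Q * Q).
Definition cell_num (Q i : nat) : nat := (i + Q * Q - cell_den Q i * cell_den Q i)%nat.

Definition phi_cell (Q i : nat) (z : Cpt) : Prop :=
  exists t, phi_at t z /\ near_fraction (cell_num Q i) (cell_den Q i) t.

Lemma cell_den_ge Q i : (Q <= cell_den Q i)%nat.
Proof. unfold cell_den. rewrite <- (Nat.sqrt_square Q) at 1. apply Nat.sqrt_le_mono. lia. Qed.

Lemma cell_index_bound Q i : (1 <= Q)%nat ->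
  INR (i + 1) <= 4 * (INR (cell_den Q i) * INR (cell_den Q i)).
Proof.
  intros HQ. pose proof (cell_den_ge Q i) as HqQ.
  pose proof (Nat.sqrt_spec (i + Q * Q) ltac:(lia)) as [_ Hsq]. fold (cell_den Q i) in Hsq.
  set (q := cell_den Q i) in *.
  assert (Hle : INR (i + 1) <= INR (S q * S q)) by (apply le_INR; lia).
  rewrite mult_INR, S_INR in Hle. pose proof (INR_ge1 q ltac:(lia)). nra.
Qed.

Lemma cell_enum_onto Q q p : (Q <= q)%nat -> (p <= q)%nat ->
  exists i, cell_den Q i = q /\ cell_num Q i = p.
Proof.
  intros HQq Hpq. exists (q * q + p - Q * Q)%nat.
  assert (E : (q * q + p - Q * Q + Q * Q = q * q + p)%nat)
    by (assert (Q * Q <= q * q)%nat by (apply Nat.mul_le_mono; auto); lia).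
  assert (Eq : cell_den Q (q * q + p - Q * Q) = q)
    by (unfold cell_den; rewrite E; apply Nat.sqrt_unique; nia).
  split; auto. unfold cell_num. rewrite Eq, E. lia.
Qed.

(* By Dirichlet's theorem the cells cover phi(I). *)
Lemma phi_I_covered Q z : (1 <= Q)%nat -> phi_I z -> exists i, phi_cell Q i z.
Proof.
  intros HQ [t [[Hx Hirr] Hphi]].
  destruct (dirichlet (2 * PI * t) Q Hx Hirr HQ) as [q [p [HQq [Hpq [Hg Happ]]]]].
  destruct (cell_enum_onto Q q p HQq Hpq) as [i [Eq Ep]].
  exists i, t. rewrite Eq, Ep. split; [auto | split; auto].
Qed.

Lemma cells_sum_bound a Q n : 4/3 < a -> (2 <= Q)%nat ->
  sum_f_R0 (fun i => Rpower (cell_diam (cell_den Q i)) a) n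
  <= weight_const a * (1 + 1 / (slack a / 2)) * Rpower (INR Q) (- slack a).
Proof.
  intros Ha HQ. pose proof (slack_pos a Ha) as Ht. set (t := slack a) in *.
  pose proof (INR_ge1 Q ltac:(lia)) as Q1.
  rewrite sum_f_R0_rsum.
  eapply Rle_trans.
  { apply (rsum_le _ (fun i => weight_const a * Rpower (INR Q) (- t)
                              * Rpower (INR (i + 1)) (- (1 + t / 2)))).
    intros i _. pose proof (cell_den_ge Q i) as HqQ. set (q := cell_den Q i) in *.
    eapply Rle_trans; [apply cell_diam_Rpower; auto; lia|].
    replace (- (2 + 2 * slack a)) with (- (2 + t) + - t) by (unfold t; ring).
    rewrite Rpower_plus.
    pose proof (den_power_le q i t Ht ltac:(lia) (cell_index_bound Q i ltac:(lia))).
    assert (Rpower (INR q) (- t) <= Rpower (INR Q) (- t))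
      by (apply Rpower_neg_anti; [lra | split; [lra | apply le_INR; auto]]).
    pose proof (Rpower_pos (cell_const a) a). pose proof (Rpower_pos 4 (1 + t / 2)).
    pose proof (Rpower_pos (INR q) (- (2 + t))). pose proof (Rpower_pos (INR q) (- t)).
    pose proof (Rpower_pos (INR (i + 1)) (- (1 + t / 2))).
    unfold weight_const. fold t.
    apply Rle_trans with (Rpower (cell_const a) a
      * ((Rpower 4 (1 + t / 2) * Rpower (INR (i + 1)) (- (1 + t / 2))) * Rpower (INR Q) (- t)));
      [apply Rmult_le_compat_l; [lra | apply Rmult_le_compat; lra] | right; ring]. }
  rewrite rsum_scal. pose proof (zeta_bound (t / 2) (S n) ltac:(lra)).
  assert (0 < weight_const a * Rpower (INR Q) (- t)).
  { unfold weight_const. repeat apply Rmult_lt_0_compat; apply Rpower_pos. }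
  replace (weight_const a * (1 + 1 / (t / 2)) * Rpower (INR Q) (- t))
    with (weight_const a * Rpower (INR Q) (- t) * (1 + 1 / (t / 2))) by ring.
  apply Rmult_le_compat_l; lra.
Qed.

Lemma cell_diam_le_scale a Q q : 4/3 < a -> (1 <= Q)%nat -> (Q <= q)%nat ->
  cell_diam q <= cell_const a * Rpower (INR Q) (cell_exponent a).
Proof.
  intros Ha HQ HQq.
  apply Rle_trans with (cell_const a * Rpower (INR q) (cell_exponent a));
    [apply cell_diam_le; auto; lia|].
  apply Rmult_le_compat_l; [left; apply cell_const_pos; auto|].
  pose proof (cell_exponent_neg a Ha). pose proof (INR_ge1 Q HQ).
  replace (cell_exponent a) with (- (- cell_exponent a)) by ring.
  apply Rpower_neg_anti; [lra | split; [lra | apply le_INR; auto]].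
Qed.

Lemma choose_scale a delta eps : 4/3 < a -> 0 < delta -> 0 < eps ->
  exists Q, (2 <= Q)%nat /\ cell_const a * Rpower (INR Q) (cell_exponent a) <= delta /\
    weight_const a * (1 + 1 / (slack a / 2)) * Rpower (INR Q) (- slack a) <= eps.
Proof.
  intros Ha Hd He. pose proof (slack_pos a Ha). pose proof (cell_const_pos a Ha).
  set (K := weight_const a * (1 + 1 / (slack a / 2))).
  assert (HK : 0 < K).
  { unfold K, weight_const. assert (0 < 1 / (slack a / 2)) by (apply Rdiv_lt_0_compat; lra).
    repeat apply Rmult_lt_0_compat; try apply Rpower_pos; lra. }
  destruct (Rpower_neg_small (- cell_exponent a) (delta / cell_const a)) as [M1 [HM1 H1]];
    [pose proof (cell_exponent_neg a Ha); lra | apply Rdiv_lt_0_compat; lra|].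
  destruct (Rpower_neg_small (slack a) (eps / K)) as [M2 [HM2 H2]];
    [lra | apply Rdiv_lt_0_compat; lra|].
  destruct (INR_unbounded (Rmax M1 M2 + 2)) as [Q HQ].
  pose proof (Rmax_l M1 M2). pose proof (Rmax_r M1 M2).
  assert (HQ2 : (2 <= Q)%nat).
  { destruct (Nat.le_gt_cases 2 Q) as [|Hlt]; auto.
    assert (INR Q <= INR 1) by (apply le_INR; lia). simpl in *. lra. }
  exists Q. split; [auto | split].
  - specialize (H1 (INR Q) ltac:(lra)). rewrite Ropp_involutive in H1.
    apply Rmult_le_reg_l with (/ cell_const a); [apply Rinv_0_lt_compat; lra|].
    rewrite <- Rmult_assoc, Rinv_l, Rmult_1_l by lra.
    unfold Rdiv in H1. rewrite Rmult_comm in H1. exact H1.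
  - specialize (H2 (INR Q) ltac:(lra)). fold K.
    apply Rmult_le_reg_l with (/ K); [apply Rinv_0_lt_compat; lra|].
    rewrite <- Rmult_assoc, Rinv_l, Rmult_1_l by lra.
    unfold Rdiv in H2. rewrite Rmult_comm in H2. exact H2.
Qed.

Theorem mainTheorem3 : forall alpha : R, 4 / 3 < alpha -> hausdorff_null alpha phi_I.
Proof.
  intros a Ha delta eps Hdelta Heps.
  destruct (choose_scale a delta eps Ha Hdelta Heps) as [Q [HQ [Hsmall Hsum]]].
  exists (phi_cell Q), (fun i => cell_diam (cell_den Q i)).
  split; [|split].
  - intros i. pose proof (cell_den_ge Q i). split; [split|].
    + apply cell_diam_pos. lia.
    + eapply Rle_trans; [apply (cell_diam_le_scale a Q) | exact Hsmall]; auto; lia.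
    + intros z1 z2 [t1 [P1 N1]] [t2 [P2 N2]].
      apply (phi_cell_diam (cell_num Q i) _ t1 t2); auto; lia.
  - intros z Hz. apply phi_I_covered; [lia | auto].
  - intros n. eapply Rle_trans; [apply cells_sum_bound; auto | exact Hsum].
Qed.
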